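(* Under size movement costs: for any $\epsilon>0$, there exists a fully-dynamic bin packing algorithm with asymptotic competitive ratio $(1+\epsilon)$, additive term $O(\epsilon^{-2})$ and amortized recourse $O(\epsilon^{-1})$. Conversely, for infinitely many $\epsilon>0$, any fully-dynamic bin packing algorithm with asymptotic competitive ratio $(1+\epsilon)$ and additive term $o(n)$ requires $\Omega(\epsilon^{-1})$ amortized recourse.
   Context: Fully-dynamic bin packing: items of size $s_i\in[0,1]$ are inserted and deleted; at each time $t$ the algorithm maintains a packing of the current items $\mathcal{I}_t$ into unit bins and pays movement cost $c_i$ each time it moves item $i$. Size movement costs means $c_i=s_i$ for every item. The algorithm has asymptotic competitive ratio $\alpha'$ with additive term $\beta$ if at all times it uses at most $\alpha'\cdot OPT(\mathcal{I}_t)+\beta$ bins ($OPT$ the optimal number of bins), and amortized recourse $\gamma$ if its total movement cost up to time $t$ is at most $\gamma\sum_{i=1}^t c_i$, $c_i$ being the cost of the item updated at time $i$. $n$ denotes the number of items. *)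

From Stdlib Require Import Reals Lra List Arith Bool ClassicalEpsilon.
Import ListNotations.
Open Scope R_scope.
Open Scope bool_scope.

(** A sequence of
    updates is a list, earliest update first; time t = prefix of length t. *)
Inductive update : Type :=
| Ins : nat -> R -> update
| Del : nat -> update.

Definition sumR (l : list R) : R := fold_right Rplus 0 l.

Definition drop_id (i : nat) (l : list (nat * R)) : list (nat * R) :=
  filter (fun p => negb (Nat.eqb (fst p) i)) l.

Definition step (l : list (nat * R)) (u : update) : list (nat * R) :=
  match u with
  | Ins i s => (i, s) :: drop_id i l
  | Del i => drop_id i l
  end.

Definition cur (sigma : list update) : list (nat * R) := fold_left step sigma nil.

Definition present (i : nat) (l : list (nat * R)) : Prop := In i (map fst l).

Definition wf (sigma : list update) : Prop :=
  forall t, (t < length sigma)%nat ->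
    match nth t sigma (Del 0) with
    | Ins i s => 0 <= s <= 1 /\ ~ present i (cur (firstn t sigma))
    | Del i => present i (cur (firstn t sigma))
    end.

(** A (deterministic, online) algorithm maps the update history so far to
    a packing: a bin label for each item id. *)
Definition algorithm := list update -> nat -> nat.

Definition load (A : algorithm) (sigma : list update) (b : nat) : R :=
  sumR (map snd (filter (fun p => Nat.eqb (A sigma (fst p)) b) (cur sigma))).

Definition valid_alg (A : algorithm) : Prop :=
  forall sigma, wf sigma -> forall b, load A sigma b <= 1.

Definition bins_used (A : algorithm) (sigma : list update) : nat :=
  length (nodup Nat.eq_dec (map (fun p => A sigma (fst p)) (cur sigma))).

Definition packable (l : list R) (k : nat) : Prop :=
  exists f : nat -> nat,
    (forall j, (j < length l)%nat -> (f j < k)%nat) /\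
    (forall b, (b < k)%nat ->
       sumR (map (fun j => nth j l 0) (filter (fun j => Nat.eqb (f j) b) (seq 0 (length l)))) <= 1).

Definition OPT (l : list R) : nat :=
  epsilon (inhabits 0%nat)
    (fun k => packable l k /\ forall k', packable l k' -> (k <= k')%nat).

Definition sizes (sigma : list update) : list R := map snd (cur sigma).

Definition competitive_fn (A : algorithm) (alpha : R) (f : nat -> R) : Prop :=
  forall sigma, wf sigma ->
    INR (bins_used A sigma) <= alpha * INR (OPT (sizes sigma)) + f (length (cur sigma)).

Definition competitive (A : algorithm) (alpha beta : R) : Prop :=
  competitive_fn A alpha (fun _ => beta).

Definition upd_cost (prev : list update) (u : update) : R :=
  match u with
  | Ins _ s => s
  | Del i => sumR (map snd (filter (fun p => Nat.eqb (fst p) i) (cur prev)))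
  end.

Definition move_cost (A : algorithm) (prev next : list update) : R :=
  sumR (map snd (filter (fun p =>
          existsb (fun q => Nat.eqb (fst q) (fst p)) (cur next)
          && negb (Nat.eqb (A prev (fst p)) (A next (fst p))))
        (cur prev))).

Definition total_move (A : algorithm) (sigma : list update) : R :=
  sumR (map (fun t => move_cost A (firstn t sigma) (firstn (S t) sigma)) (seq 0 (length sigma))).

Definition total_cost (sigma : list update) : R :=
  sumR (map (fun t => upd_cost (firstn t sigma) (nth t sigma (Del 0))) (seq 0 (length sigma))).

Definition recourse (A : algorithm) (gamma : R) : Prop :=
  forall sigma, wf sigma -> total_move A sigma <= gamma * total_cost sigma.

Definition little_o (f : nat -> R) : Prop :=
  forall eta, 0 < eta -> exists N, forall n, (N <= n)%nat -> f n <= eta * INR n.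

(* Upper bound: the algorithm repacks all items optimally, and until the next repacking handles
   updates lazily: deleted items are dropped and inserted ones go by Next Fit into fresh bins.
   It repacks as soon as the cost U of the updates since the last repacking reaches d = eps/4
   times the volume V0 then repacked. A repacking moves at most the current volume V0 + U, which
   the cost U >= d V0 pays for, so the recourse is 1 + 1/d. Between repackings, the items surviving
   from the last repacking together with the D deleted since then fit in OPT + 2D + 1 bins, and Next
   Fit adds 2W + 1 bins for the inserted volume W; as D + W <= U <= d V0 <= d (OPT + U), this is at
   most (1 + 4d) OPT + 2 bins.

   Lower bound: with c = 100 eps, M items of each of the four heavy sizes 1/2 + c, 1/2 + 8c/5
   (big) and 1/2 - 2c, 1/2 - 13c/5 (medium) stay throughout, while the adversary alternates
   between 2M small items of size c (phase A) and M items of each of the sizes 2c/5, 8c/5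
   (phase B). Both phases pack exactly into 2M bins, but with different pairs of a big and a
   medium item per bin: in phase A the pairs must be matched (1/2 + c with 1/2 - 2c, 1/2 + 8c/5
   with 1/2 - 13c/5), in phase B they must not. An algorithm with ratio 1 + eps and additive term
   o(n) uses at most 2M + 8 eps M bins for large M, which forces 5M/4 big items to change between
   matched and unmatched at every phase change, each change moving a heavy item, of size at least
   2/5. So every round costs the algorithm M, while the updates of a round cost 8cM = 800 eps M. *)

From Stdlib Require Import Reals Lra Lia List Arith Bool Permutation ClassicalEpsilon Classical Psatz.
Import ListNotations.
Open Scope R_scope.

Definition sumf {X : Type} (h : X -> R) (l : list X) : R := sumR (map h l).
Definition b2R (b : bool) : R := if b then 1 else 0.

Lemma b2R_01 b : 0 <= b2R b <= 1.
Proof. destruct b; simpl; lra. Qed.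

Lemma sumf_nil {X} (h : X -> R) : sumf h [] = 0.
Proof. reflexivity. Qed.

Lemma sumf_cons {X} (h : X -> R) x l : sumf h (x :: l) = h x + sumf h l.
Proof. reflexivity. Qed.

Lemma sumf_app {X} (h : X -> R) l1 l2 : sumf h (l1 ++ l2) = sumf h l1 + sumf h l2.
Proof. induction l1 as [|x l IH]; simpl; rewrite ?sumf_cons, ?IH; unfold sumf; simpl; lra. Qed.

Lemma sumf_ext {X} (h g : X -> R) l : (forall x, In x l -> h x = g x) -> sumf h l = sumf g l.
Proof. intros H. unfold sumf. f_equal. apply map_ext_in. exact H. Qed.

Lemma sumf_le {X} (h g : X -> R) l : (forall x, In x l -> h x <= g x) -> sumf h l <= sumf g l.
Proof.
  induction l as [|a l IH]; intros H; rewrite ?sumf_nil, ?sumf_cons; [lra|].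
  assert (h a <= g a) by (apply H; left; auto).
  assert (sumf h l <= sumf g l) by (apply IH; intros; apply H; right; auto).
  lra.
Qed.

Lemma sumf_zero {X} (l : list X) : sumf (fun _ => 0) l = 0.
Proof. induction l; rewrite ?sumf_nil, ?sumf_cons, ?IHl; lra. Qed.

Lemma sumf_nonneg {X} (h : X -> R) l : (forall x, In x l -> 0 <= h x) -> 0 <= sumf h l.
Proof. intros H. rewrite <- (sumf_zero l). apply sumf_le; auto. Qed.

Lemma sumf_perm {X} (h : X -> R) l l' : Permutation l l' -> sumf h l = sumf h l'.
Proof. induction 1; rewrite ?sumf_cons; lra. Qed.

Lemma sumf_plus {X} (h g : X -> R) l : sumf (fun x => h x + g x) l = sumf h l + sumf g l.
Proof. induction l; rewrite ?sumf_nil, ?sumf_cons, ?IHl; lra. Qed.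

Lemma sumf_minus {X} (h g : X -> R) l : sumf (fun x => h x - g x) l = sumf h l - sumf g l.
Proof. induction l; rewrite ?sumf_nil, ?sumf_cons, ?IHl; lra. Qed.

Lemma sumf_scal {X} (a : R) (h : X -> R) l : sumf (fun x => a * h x) l = a * sumf h l.
Proof. induction l; rewrite ?sumf_nil, ?sumf_cons, ?IHl; lra. Qed.

Lemma sumf_const {X} (a : R) (l : list X) : sumf (fun _ => a) l = a * INR (length l).
Proof.
  induction l; rewrite ?sumf_nil, ?sumf_cons, ?IHl; simpl length; rewrite ?S_INR; simpl; lra.
Qed.

Lemma sumf_seq_const (g : nat -> R) v a n : (forall i, (a <= i < a + n)%nat -> g i = v) ->
  sumf g (seq a n) = v * INR n.
Proof.
  revert a; induction n as [|n IH]; intros a H; cbn [seq]; [rewrite sumf_nil; simpl; lra|].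
  rewrite sumf_cons, (H a) by lia. rewrite IH by (intros; apply H; lia). rewrite S_INR. lra.
Qed.

Lemma sumf_seq_shift (F : nat -> R) a n : sumf F (seq a n) = sumf (fun t => F (a + t)%nat) (seq 0 n).
Proof.
  revert a F; induction n; intros a F; auto.
  cbn [seq]. rewrite !sumf_cons, IHn, (IHn 1%nat), Nat.add_0_r. f_equal.
  apply sumf_ext. intros t _. f_equal. lia.
Qed.

Lemma sumf_filter {X} (h : X -> R) (P : X -> bool) l :
  sumf h (filter P l) = sumf (fun x => if P x then h x else 0) l.
Proof.
  induction l; cbn [filter]; auto. rewrite sumf_cons.
  destruct (P a); rewrite ?sumf_cons, IHl; lra.
Qed.

Lemma sumf_filter_le {X} (h : X -> R) P l :
  (forall x, In x l -> 0 <= h x) -> sumf h (filter P l) <= sumf h l.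
Proof.
  intros Hn. rewrite sumf_filter. apply sumf_le. intros x Hx.
  specialize (Hn x Hx). destruct (P x); lra.
Qed.

Lemma sumf_filter_split {X} (h : X -> R) (P : X -> bool) l :
  sumf h l = sumf h (filter P l) + sumf h (filter (fun x => negb (P x)) l).
Proof.
  rewrite !sumf_filter, <- sumf_plus. apply sumf_ext. intros x _. destruct (P x); simpl; lra.
Qed.

Lemma sumf_map {X Y} (h : Y -> R) (f : X -> Y) l : sumf h (map f l) = sumf (fun x => h (f x)) l.
Proof. unfold sumf; rewrite map_map; auto. Qed.

Lemma sumf_filter_false {X} (h : X -> R) (P : X -> bool) l :
  (forall x, In x l -> P x = false) -> sumf h (filter P l) = 0.
Proof.
  intros H. rewrite sumf_filter. transitivity (sumf (fun _ => 0) l); [|apply sumf_zero].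
  apply sumf_ext. intros x Hx. rewrite H; auto.
Qed.

Lemma sumf_incl {X} (h : X -> R) (P L : list X) :
  NoDup P -> incl P L -> (forall x, In x L -> 0 <= h x) -> sumf h P <= sumf h L.
Proof.
  revert L; induction P as [|x P IH]; intros L ND Inc Hn.
  - rewrite sumf_nil; apply sumf_nonneg; auto.
  - inversion ND as [|? ? Hx ND']; subst.
    destruct (in_split _ _ (Inc x (or_introl eq_refl))) as (L1 & L2 & ->).
    rewrite (sumf_perm h (L1 ++ x :: L2) (x :: L1 ++ L2)) by (symmetry; apply Permutation_middle).
    rewrite !sumf_cons.
    enough (sumf h P <= sumf h (L1 ++ L2)) by lra.
    apply IH; auto.
    + intros y Hy. assert (Hy' := Inc y (or_intror Hy)).
      apply in_app_or in Hy'. apply in_or_app. destruct Hy' as [H|[H|H]]; subst; tauto.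
    + intros y Hy; apply Hn. apply in_app_or in Hy; apply in_or_app; simpl; tauto.
Qed.

Lemma sumf_ge_member {X} (g : X -> R) L y :
  (forall x, In x L -> 0 <= g x) -> In y L -> g y <= sumf g L.
Proof.
  intros Hn Hy. rewrite <- (Rplus_0_r (g y)).
  apply (sumf_incl g [y]); auto; [repeat constructor; auto | intros z [<-|[]]; auto].
Qed.

Lemma sumf_indicator_nodup (n : nat) (v : R) (B : list nat) :
  NoDup B -> sumf (fun b => if Nat.eqb n b then v else 0) B = if in_dec Nat.eq_dec n B then v else 0.
Proof.
  induction B as [|b B IH]; intros ND; simpl; auto.
  inversion ND; subst. rewrite sumf_cons, IH by auto.
  destruct (Nat.eqb_spec n b); subst.
  - destruct (in_dec Nat.eq_dec b B); [contradiction|].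
    destruct (Nat.eq_dec b b); [lra|congruence].
  - destruct (in_dec Nat.eq_dec n B); destruct (Nat.eq_dec b n); try lra; congruence.
Qed.

Lemma sumf_partition {X} (f : X -> nat) (h : X -> R) (B : list nat) (l : list X) :
  NoDup B ->
  sumf (fun b => sumf h (filter (fun x => Nat.eqb (f x) b) l)) B
  = sumf (fun x => if in_dec Nat.eq_dec (f x) B then h x else 0) l.
Proof.
  intros ND; induction l as [|x l IH].
  - apply sumf_zero.
  - rewrite sumf_cons, <- IH, <- sumf_indicator_nodup by auto.
    rewrite <- sumf_plus. apply sumf_ext. intros b _; simpl.
    destruct (Nat.eqb (f x) b); rewrite ?sumf_cons; lra.
Qed.

Lemma sumf_partition_covering {X} (f : X -> nat) (h : X -> R) (B : list nat) (l : list X) :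
  NoDup B -> (forall x, In x l -> In (f x) B) ->
  sumf (fun b => sumf h (filter (fun x => Nat.eqb (f x) b) l)) B = sumf h l.
Proof.
  intros ND Hcov. rewrite sumf_partition by auto.
  apply sumf_ext. intros x Hx. destruct in_dec as [|Hn]; [|exfalso; apply Hn]; auto.
Qed.

Definition labels {X} (f : X -> nat) (l : list X) := nodup Nat.eq_dec (map f l).

Lemma sumf_partition_labels {X} (f : X -> nat) (h : X -> R) (l : list X) :
  sumf (fun b => sumf h (filter (fun x => Nat.eqb (f x) b) l)) (labels f l) = sumf h l.
Proof.
  apply sumf_partition_covering; [apply NoDup_nodup|].
  intros x Hx. apply nodup_In, in_map; auto.
Qed.

Lemma length_labels_le {X} (f : X -> nat) l K :
  (forall x, In x l -> (f x <= K)%nat) -> (length (labels f l) <= S K)%nat.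
Proof.
  intros H. replace (S K) with (length (seq 0 (S K))) by apply length_seq.
  apply NoDup_incl_length; [apply NoDup_nodup|].
  intros b Hb. apply nodup_In, in_map_iff in Hb as (x & <- & Hx). apply in_seq. specialize (H x Hx). lia.
Qed.

Lemma cur_app h s : cur (h ++ s) = fold_left step s (cur h).
Proof. unfold cur. apply fold_left_app. Qed.

Lemma cur_snoc h u : cur (h ++ [u]) = step (cur h) u.
Proof. apply cur_app. Qed.

Lemma in_drop_id i l x : In x (drop_id i l) <-> In x l /\ fst x <> i.
Proof. unfold drop_id. rewrite filter_In, negb_true_iff, Nat.eqb_neq. reflexivity. Qed.

Lemma NoDup_fst_filter (P : nat * R -> bool) L : NoDup (map fst L) -> NoDup (map fst (filter P L)).
Proof.
  induction L as [|x L IH]; simpl; intros ND; auto. inversion ND as [|? ? Hx ND']; subst.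
  destruct (P x); simpl; auto. constructor; auto. intros Hin. apply Hx.
  apply in_map_iff in Hin as (y & Ey & Hy). apply filter_In in Hy. rewrite <- Ey. apply in_map; tauto.
Qed.

Lemma NoDup_fst_step l u : NoDup (map fst l) -> NoDup (map fst (step l u)).
Proof.
  intros ND; destruct u as [i s|i]; simpl; [constructor|]; try apply NoDup_fst_filter; auto.
  intros Hin. apply in_map_iff in Hin as (y & Hy & Hy2). apply in_drop_id in Hy2. simpl in Hy. tauto.
Qed.

Lemma NoDup_fst_cur h : NoDup (map fst (cur h)).
Proof.
  unfold cur. assert (H : NoDup (map fst (@nil (nat * R)))) by constructor.
  revert H. generalize (@nil (nat * R)).
  induction h as [|u h IH]; simpl; intros l ND; auto. apply IH, NoDup_fst_step; auto.
Qed.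

Lemma NoDup_cur h : NoDup (cur h).
Proof. apply (NoDup_map_inv fst), NoDup_fst_cur. Qed.

Lemma present_in x l : In x l -> present (fst x) l.
Proof. apply in_map. Qed.

Lemma present_iff i l : present i l <-> exists s, In (i, s) l.
Proof.
  unfold present; rewrite in_map_iff; split.
  - intros ((j,s) & E & H); simpl in E; subst; eauto.
  - intros (s & H); exists (i,s); auto.
Qed.

Lemma In_step x l u : In x (step l u) <->
  match u with Ins i s => x = (i,s) \/ (In x l /\ fst x <> i) | Del i => In x l /\ fst x <> i end.
Proof. destruct u; simpl; rewrite ?in_drop_id; intuition. Qed.

Lemma present_ins i j s l : present i (step l (Ins j s)) <-> i = j \/ present i l.
Proof.
  unfold present; simpl. rewrite in_map_iff. split.
  - intros [E|(x & Hx & Hin)]; auto. apply in_drop_id in Hin as [Hin _]. right; subst; apply in_map; auto.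
  - intros [E|Hp]; auto. destruct (Nat.eq_dec j i); auto. right.
    apply in_map_iff in Hp as (x & Hx & Hin). exists x; split; auto. apply in_drop_id; split; auto; lia.
Qed.

Lemma present_del i j l : present i (step l (Del j)) <-> present i l /\ i <> j.
Proof.
  unfold present; simpl. rewrite !in_map_iff. split.
  - intros (x & Hx & Hin). apply in_drop_id in Hin as [Hin Hne]. subst; split; eauto.
  - intros [(x & Hx & Hin) Hne]. exists x; split; auto. apply in_drop_id; split; auto; subst; auto.
Qed.

Lemma filter_filter_andb {X} (P Q : X -> bool) L : filter Q (filter P L) = filter (fun x => P x && Q x) L.
Proof.
  induction L as [|x L IH]; simpl; auto. destruct (P x); simpl; destruct (Q x); simpl; rewrite ?IH; auto.
Qed.

Lemma sumf_step_ins_le l i s : (forall x, In x l -> 0 <= snd x) ->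
  sumf snd (step l (Ins i s)) <= s + sumf snd l.
Proof. intros Hn. simpl. rewrite sumf_cons. simpl. apply Rplus_le_compat_l, sumf_filter_le; auto. Qed.

Lemma sumf_step_del_le l i : (forall x, In x l -> 0 <= snd x) -> sumf snd (step l (Del i)) <= sumf snd l.
Proof. intros Hn. apply sumf_filter_le; auto. Qed.

Lemma drop_id_app i a b : drop_id i (a ++ b) = drop_id i a ++ drop_id i b.
Proof. apply filter_app. Qed.

Lemma drop_id_filter i (P : nat -> bool) L :
  drop_id i (filter (fun x => P (fst x)) L) = filter (fun x => P (fst x) && negb (Nat.eqb (fst x) i)) L.
Proof. apply filter_filter_andb. Qed.

Lemma drop_id_notin i l : ~ present i l -> drop_id i l = l.
Proof.
  intros H. unfold drop_id. induction l as [|x l IH]; simpl; auto.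
  destruct (Nat.eqb_spec (fst x) i). exfalso; apply H; left; auto.
  simpl. f_equal. apply IH. intros Hp; apply H; right; auto.
Qed.

Lemma In_firstn {X} (l : list X) t x : In x (firstn t l) -> In x l.
Proof. intros H. rewrite <- (firstn_skipn t l). apply in_or_app; auto. Qed.

Lemma NoDup_nth_notin_firstn {X} (l : list X) t d :
  NoDup l -> (t < length l)%nat -> ~ In (nth t l d) (firstn t l).
Proof.
  intros ND Ht Hin. rewrite <- (firstn_skipn_middle t l (nth_error_nth' l d Ht)) in ND.
  apply NoDup_remove_2 in ND. apply ND. apply in_or_app; auto.
Qed.

Definition wf_from (l : list (nat * R)) (s : list update) : Prop :=
  forall t, (t < length s)%nat ->
    match nth t s (Del 0) with
    | Ins i x => 0 <= x <= 1 /\ ~ present i (fold_left step (firstn t s) l)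
    | Del i => present i (fold_left step (firstn t s) l)
    end.

Lemma wf_from_app l s1 s2 :
  wf_from l s1 -> wf_from (fold_left step s1 l) s2 -> wf_from l (s1 ++ s2).
Proof.
  intros H1 H2 t Ht. rewrite length_app in Ht.
  destruct (Nat.lt_ge_cases t (length s1)) as [Hlt|Hge].
  - rewrite app_nth1 by auto. rewrite firstn_app.
    replace (t - length s1)%nat with 0%nat by lia. rewrite firstn_O, app_nil_r. apply H1; auto.
  - replace t with (length s1 + (t - length s1))%nat by lia.
    rewrite app_nth2_plus, firstn_app_2, fold_left_app. apply H2; lia.
Qed.

Lemma wf_prefix s1 s2 : wf (s1 ++ s2) -> wf s1.
Proof.
  intros H t Ht. specialize (H t). rewrite length_app in H.
  rewrite app_nth1 in H by auto. rewrite firstn_app in H.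
  replace (t - length s1)%nat with 0%nat in H by lia. rewrite firstn_O, app_nil_r in H. apply H; lia.
Qed.

Lemma wf_last h u : wf (h ++ [u]) ->
  match u with Ins i s => 0 <= s <= 1 /\ ~ present i (cur h) | Del i => present i (cur h) end.
Proof.
  intros H. specialize (H (length h)). rewrite length_app, nth_middle in H.
  rewrite firstn_app, Nat.sub_diag, firstn_O, app_nil_r, firstn_all in H.
  apply H. simpl. lia.
Qed.

Lemma wf_cur_sizes h : wf h -> forall x, In x (cur h) -> 0 <= snd x <= 1.
Proof.
  induction h as [|u h IH] using rev_ind; intros Hw x Hx; [destruct Hx|].
  pose proof (wf_last h u Hw) as Hl. specialize (IH (wf_prefix h [u] Hw)).
  rewrite cur_snoc in Hx. apply In_step in Hx. destruct u as [i s|i].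
  - destruct Hx as [->|[Hx _]]; [apply Hl|]; auto.
  - destruct Hx as [Hx _]; auto.
Qed.

(** * Packings *)

Definition bin_load (L : list (nat * R)) (g : nat -> nat) (b : nat) : R :=
  sumf snd (filter (fun x => Nat.eqb (g (fst x)) b) L).

Definition packs (L : list (nat * R)) (g : nat -> nat) (k : nat) : Prop :=
  (forall x, In x L -> (g (fst x) < k)%nat) /\ forall b, bin_load L g b <= 1.

Definition fupd (g : nat -> nat) (i v : nat) : nat -> nat := fun j => if Nat.eqb j i then v else g j.

Lemma bin_load_app L1 L2 g b : bin_load (L1 ++ L2) g b = bin_load L1 g b + bin_load L2 g b.
Proof. unfold bin_load. rewrite filter_app, sumf_app. auto. Qed.

Lemma bin_load_empty L g b : (forall x, In x L -> g (fst x) <> b) -> bin_load L g b = 0.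
Proof.
  intros H. apply sumf_filter_false. intros x Hx. apply Nat.eqb_neq, H; auto.
Qed.

Lemma bin_load_nonneg L g b : (forall x, In x L -> 0 <= snd x) -> 0 <= bin_load L g b.
Proof. intros Hn. apply sumf_nonneg. intros x Hx. apply filter_In in Hx. apply Hn; tauto. Qed.

Lemma bin_load_cons_fupd L g x v b : ~ In (fst x) (map fst L) ->
  bin_load (x :: L) (fupd g (fst x) v) b = (if Nat.eqb v b then snd x else 0) + bin_load L g b.
Proof.
  intros Hn. unfold bin_load. cbn [filter]. unfold fupd at 1. rewrite Nat.eqb_refl.
  rewrite (filter_ext_in _ (fun y => Nat.eqb (g (fst y)) b) L).
  - destruct (Nat.eqb v b); rewrite ?sumf_cons; lra.
  - intros y Hy. unfold fupd. destruct (Nat.eqb_spec (fst y) (fst x)); auto.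
    exfalso; apply Hn; rewrite <- e; apply in_map; auto.
Qed.

Lemma bin_load_drop_id_le i L g b :
  (forall x, In x L -> 0 <= snd x) -> bin_load (drop_id i L) g b <= bin_load L g b.
Proof.
  intros Hn. unfold bin_load, drop_id. rewrite !sumf_filter. apply sumf_le. intros x Hx.
  specialize (Hn x Hx). destruct (negb _), (Nat.eqb _ _); simpl; lra.
Qed.

Lemma bin_load_insert L g i s v b : (forall x, In x L -> 0 <= snd x) ->
  bin_load ((i, s) :: drop_id i L) (fupd g i v) b <= (if Nat.eqb v b then s else 0) + bin_load L g b.
Proof.
  intros Hn. pose proof (bin_load_cons_fupd (drop_id i L) g (i, s) v b) as E. simpl in E. rewrite E.
  - apply Rplus_le_compat_l, bin_load_drop_id_le; auto.
  - intros Hin. apply in_map_iff in Hin as (y & Ey & Hy). apply in_drop_id in Hy. tauto.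
Qed.

Lemma sumf_bin_loads L g k : (forall x, In x L -> (g (fst x) < k)%nat) ->
  sumf snd L = sumf (bin_load L g) (seq 0 k).
Proof.
  intros H. symmetry. apply (sumf_partition_covering (fun x => g (fst x))); [apply seq_NoDup|].
  intros x Hx. apply in_seq. specialize (H x Hx). lia.
Qed.

Lemma packs_intro L g k : (forall x, In x L -> (g (fst x) < k)%nat) ->
  (forall b, (b < k)%nat -> bin_load L g b <= 1) -> packs L g k.
Proof.
  intros H1 H2. split; auto. intros b. destruct (Nat.lt_ge_cases b k); auto.
  rewrite bin_load_empty; [lra|]. intros x Hx E. specialize (H1 x Hx). lia.
Qed.

Lemma map_nth_filter_seq {X Y} (F : X -> Y) (P : X -> bool) (l : list X) (d : X) :
  map (fun j => F (nth j l d)) (filter (fun j => P (nth j l d)) (seq 0 (length l)))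
  = map F (filter P l).
Proof.
  induction l as [|x l IH]; auto.
  cbn [length seq]. rewrite <- seq_shift. cbn [filter nth].
  rewrite filter_map_swap. cbn [nth].
  destruct (P x); cbn [map]; rewrite map_map; cbn [nth]; rewrite IH; auto.
Qed.

Lemma map_nth_seq {X Y} (F : X -> Y) (l : list X) (d : X) :
  map (fun j => F (nth j l d)) (seq 0 (length l)) = map F l.
Proof.
  pose proof (map_nth_filter_seq F (fun _ => true) l d) as H.
  rewrite !filter_true in H. exact H.
Qed.

Lemma packs_packable L g k : packs L g k -> packable (map snd L) k.
Proof.
  intros [H1 H2]. exists (fun j => g (fst (nth j L (0%nat, 0)))). split.
  - intros j Hj. rewrite length_map in Hj. apply H1, nth_In; auto.
  - intros b Hb. rewrite length_map.
    rewrite (map_ext_in (fun j => nth j (map snd L) 0) (fun j => snd (nth j L (0%nat,0))))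
      by (intros j _; apply (map_nth snd L (0%nat, 0) j)).
    rewrite (map_nth_filter_seq snd (fun x => Nat.eqb (g (fst x)) b) L (0%nat,0)).
    apply H2.
Qed.

Fixpoint index_of (i : nat) (l : list (nat * R)) : nat :=
  match l with [] => 0%nat | x :: l => if Nat.eqb (fst x) i then 0%nat else S (index_of i l) end.

Lemma index_of_lt i l : In i (map fst l) -> (index_of i l < length l)%nat.
Proof.
  induction l as [|x l IH]; simpl; intros H; [tauto|].
  destruct (Nat.eqb_spec (fst x) i); [lia|]. destruct H; [contradiction|]. specialize (IH H); lia.
Qed.

Lemma index_of_nth l j d : NoDup (map fst l) -> (j < length l)%nat -> index_of (fst (nth j l d)) l = j.
Proof.
  revert j; induction l as [|y l IH]; intros j ND Hj; simpl in Hj; [lia|].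
  inversion ND as [|? ? Hy ND']; subst.
  destruct j; simpl; [rewrite Nat.eqb_refl; auto|].
  destruct (Nat.eqb_spec (fst y) (fst (nth j l d))) as [E|].
  - exfalso. apply Hy. rewrite E. apply in_map, nth_In. lia.
  - rewrite IH; auto; lia.
Qed.

Lemma packable_packs L k : NoDup (map fst L) -> packable (map snd L) k -> exists g, packs L g k.
Proof.
  intros ND (f & Hf1 & Hf2). rewrite length_map in Hf1, Hf2.
  assert (Hlt : forall x, In x L -> (f (index_of (fst x) L) < k)%nat)
    by (intros x Hx; apply Hf1, index_of_lt, in_map; auto).
  exists (fun i => f (index_of i L)). apply packs_intro; auto.
  intros b Hb. specialize (Hf2 b Hb). unfold bin_load, sumf.
  rewrite <- (map_nth_filter_seq snd (fun x => Nat.eqb (f (index_of (fst x) L)) b) L (0%nat, 0)).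
  erewrite filter_ext_in.
  2: { intros j Hj. apply in_seq in Hj. rewrite index_of_nth by (auto; lia). reflexivity. }
  erewrite map_ext. apply Hf2. intros j. symmetry. apply (map_nth snd L (0%nat, 0) j).
Qed.

Lemma packable_volume_le (l : list R) k : packable l k -> sumR l <= INR k.
Proof.
  intros (f & Hf1 & Hf2).
  assert (Hl : sumR l = sumf (fun j => nth j l 0) (seq 0 (length l))).
  { unfold sumf. rewrite (map_nth_seq (fun x => x) l 0), map_id. reflexivity. }
  rewrite Hl, <- (sumf_partition_covering f _ (seq 0 k)); [|apply seq_NoDup|].
  - replace (INR k) with (sumf (fun _ : nat => 1) (seq 0 k)) by (rewrite sumf_const, length_seq; lra).
    apply sumf_le. intros b Hb. apply in_seq in Hb. apply Hf2. lia.
  - intros j Hj. apply in_seq in Hj. apply in_seq. specialize (Hf1 j ltac:(lia)). lia.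
Qed.

Lemma min_exists (P : nat -> Prop) n : P n -> exists m, P m /\ forall k, P k -> (m <= k)%nat.
Proof.
  revert P. induction n as [n IH] using (well_founded_induction lt_wf). intros P Hn.
  destruct (classic (exists k, (k < n)%nat /\ P k)) as [(k & Hk & Pk)|Hno].
  - apply (IH k Hk P Pk).
  - exists n; split; auto. intros k Pk. destruct (Nat.lt_ge_cases k n); auto.
    exfalso; apply Hno; eauto.
Qed.

Lemma OPT_spec l k : packable l k -> packable l (OPT l) /\ forall k', packable l k' -> (OPT l <= k')%nat.
Proof.
  intros Hp. unfold OPT. apply epsilon_spec.
  destruct (min_exists (packable l) k Hp) as (m & H1 & H2). exists m; auto.
Qed.

Lemma OPT_le l k : packable l k -> (OPT l <= k)%nat.
Proof. intros Hp. apply (OPT_spec l k Hp); auto. Qed.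

Lemma packs_cons_fupd L g k k' x v :
  ~ In (fst x) (map fst L) -> packs L g k -> (k <= k')%nat -> (v < k')%nat ->
  bin_load L g v + snd x <= 1 -> packs (x :: L) (fupd g (fst x) v) k'.
Proof.
  intros Hn [P1 P2] Hk Hv Hfit. split.
  - intros y [<-|Hy]; unfold fupd; [rewrite Nat.eqb_refl; auto|].
    destruct (Nat.eqb_spec (fst y) (fst x)) as [E|]; [|specialize (P1 y Hy); lia].
    exfalso; apply Hn; rewrite <- E; apply in_map; auto.
  - intros b. rewrite bin_load_cons_fupd by auto.
    destruct (Nat.eqb_spec v b); subst; [lra|]. specialize (P2 b). lra.
Qed.

(* Next Fit keeps every bin except the last opened one more than half full. *)
Definition half_full (L : list (nat * R)) (g : nat -> nat) (k : nat) : Prop :=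
  k = 0%nat \/ exists o, (o < k)%nat /\ forall b, (b < k)%nat -> b <> o -> bin_load L g b > 1/2.

Lemma next_fit_cons L g k x :
  ~ In (fst x) (map fst L) -> 0 <= snd x <= 1 -> packs L g k -> half_full L g k ->
  exists g' k', packs (x :: L) g' k' /\ half_full (x :: L) g' k'.
Proof.
  intros Hn Hx HP Hhalf.
  assert (Hk : bin_load L g k = 0) by (apply bin_load_empty; intros y Hy E; destruct HP as [P1 _];
    specialize (P1 y Hy); lia).
  assert (Hload : forall v b, bin_load (x :: L) (fupd g (fst x) v) b
    = (if Nat.eqb v b then snd x else 0) + bin_load L g b)
    by (intros; apply bin_load_cons_fupd; auto).
  destruct Hhalf as [->|(o & Ho & Hb)].
  - exists (fupd g (fst x) 0), 1%nat. split.
    + apply (packs_cons_fupd L g 0); auto; try lia; lra.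
    + right. exists 0%nat. split; [lia|]. intros b ? ?; lia.
  - destruct (Rle_dec (bin_load L g o + snd x) 1) as [Fit|NFit].
    + exists (fupd g (fst x) o), k. split; [apply (packs_cons_fupd L g k); auto|].
      right. exists o. split; auto. intros b Hb1 Hb2. rewrite Hload.
      destruct (Nat.eqb_spec o b); [congruence|]. specialize (Hb b Hb1 Hb2). lra.
    + exists (fupd g (fst x) k), (S k). split; [apply (packs_cons_fupd L g k); auto; lra|].
      right. destruct (Rlt_dec (1/2) (bin_load L g o)) as [Big|Small].
      * exists k. split; [lia|]. intros b Hb1 Hb2. rewrite Hload.
        destruct (Nat.eqb_spec k b); [congruence|].
        destruct (Nat.eq_dec b o); [subst; lra|]. specialize (Hb b ltac:(lia) ltac:(auto)). lra.
      * exists o. split; [lia|]. intros b Hb1 Hb2. rewrite Hload.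
        destruct (Nat.eqb_spec k b); [subst; lra|]. specialize (Hb b ltac:(lia) Hb2). lra.
Qed.

Lemma next_fit_half_full (L : list (nat * R)) : NoDup (map fst L) -> (forall x, In x L -> 0 <= snd x <= 1) ->
  exists g k, packs L g k /\ half_full L g k.
Proof.
  induction L as [|x L IH]; intros ND Hs.
  - exists (fun _ => 0%nat), 0%nat. split; [split|left; auto]; [intros x []|].
    intros b. unfold bin_load. simpl. rewrite sumf_nil. lra.
  - inversion ND as [|? ? Hx ND']; subst.
    destruct (IH ND' (fun y Hy => Hs y (or_intror Hy))) as (g & k & HP & Hhalf).
    apply (next_fit_cons L g k x); auto. apply Hs; left; auto.
Qed.

Lemma next_fit_packs (L : list (nat * R)) : NoDup (map fst L) -> (forall x, In x L -> 0 <= snd x <= 1) ->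
  exists g k, packs L g k /\ INR k <= 2 * sumf snd L + 1.
Proof.
  intros ND Hs. destruct (next_fit_half_full L ND Hs) as (g & k & HP & Hhalf).
  exists g, k. split; auto.
  assert (V0 : 0 <= sumf snd L) by (apply sumf_nonneg; intros x Hx; apply Hs; auto).
  destruct Hhalf as [->|(o & Ho & Hb)]; [simpl; lra|].
  rewrite (sumf_bin_loads L g k) by apply HP.
  assert (H : sumf (fun b => 1/2 - 1/2 * (if Nat.eqb o b then 1 else 0)) (seq 0 k)
    <= sumf (bin_load L g) (seq 0 k)).
  { apply sumf_le. intros b Hbs. apply in_seq in Hbs. destruct (Nat.eqb_spec o b).
    - subst. assert (0 <= bin_load L g b) by (apply bin_load_nonneg; intros; apply Hs; auto). lra.
    - specialize (Hb b ltac:(lia) ltac:(auto)). lra. }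
  rewrite sumf_minus, sumf_const, sumf_scal, length_seq, (sumf_indicator_nodup o 1 _ (seq_NoDup _ _)) in H.
  destruct in_dec as [|Hno]; [lra|]. exfalso; apply Hno, in_seq; lia.
Qed.

Lemma packable_exists (L : list (nat * R)) : NoDup (map fst L) -> (forall x, In x L -> 0 <= snd x <= 1) ->
  exists k, packable (map snd L) k.
Proof.
  intros ND Hs. destruct (next_fit_packs L ND Hs) as (g & k & HP & _). exists k.
  apply (packs_packable L g k HP).
Qed.

Lemma OPT_packable (L : list (nat * R)) : NoDup (map fst L) -> (forall x, In x L -> 0 <= snd x <= 1) ->
  packable (map snd L) (OPT (map snd L)).
Proof. intros ND Hs. destruct (packable_exists L ND Hs) as (k & Hk). apply (OPT_spec _ k Hk). Qed.

Lemma volume_le_OPT (L : list (nat * R)) : NoDup (map fst L) -> (forall x, In x L -> 0 <= snd x <= 1) ->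
  sumf snd L <= INR (OPT (map snd L)).
Proof. intros ND Hs. apply packable_volume_le, OPT_packable; auto. Qed.

Definition optimal_labeling (L : list (nat * R)) : nat -> nat :=
  epsilon (inhabits (fun _ => 0%nat)) (fun g => packs L g (OPT (map snd L))).

Lemma optimal_labeling_packs (L : list (nat * R)) : NoDup (map fst L) ->
  (forall x, In x L -> 0 <= snd x <= 1) ->
  packs L (optimal_labeling L) (OPT (map snd L)).
Proof. intros ND Hs. unfold optimal_labeling. apply epsilon_spec, packable_packs, OPT_packable; auto. Qed.

Definition moved (A : algorithm) h1 h2 (x : nat * R) : R :=
  b2R (negb (Nat.eqb (A h1 (fst x)) (A h2 (fst x)))).

Definition move_cost_during (A : algorithm) h s : R :=
  sumf (fun t => move_cost A (h ++ firstn t s) (h ++ firstn (S t) s)) (seq 0 (length s)).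

Lemma moved_01 A h1 h2 x : 0 <= moved A h1 h2 x <= 1.
Proof. apply b2R_01. Qed.

Lemma moved_lt1 A h1 h2 x : moved A h1 h2 x < 1 -> A h1 (fst x) = A h2 (fst x).
Proof. unfold moved. destruct (Nat.eqb_spec (A h1 (fst x)) (A h2 (fst x))); simpl; auto; lra. Qed.

Lemma moved_sym A h1 h2 x : moved A h1 h2 x = moved A h2 h1 x.
Proof. unfold moved. rewrite Nat.eqb_sym. auto. Qed.

Lemma moved_triangle A h1 h2 h3 x : moved A h1 h3 x <= moved A h1 h2 x + moved A h2 h3 x.
Proof.
  unfold moved. destruct (Nat.eqb_spec (A h1 (fst x)) (A h3 (fst x))),
    (Nat.eqb_spec (A h1 (fst x)) (A h2 (fst x))),
    (Nat.eqb_spec (A h2 (fst x)) (A h3 (fst x))); simpl; try lra. congruence.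
Qed.

Lemma move_cost_during_app A h s1 s2 :
  move_cost_during A h (s1 ++ s2) = move_cost_during A h s1 + move_cost_during A (h ++ s1) s2.
Proof.
  unfold move_cost_during. rewrite length_app, seq_app, sumf_app. f_equal.
  - apply sumf_ext. intros t Ht. apply in_seq in Ht. rewrite !firstn_app.
    replace (t - length s1)%nat with 0%nat by lia. replace (S t - length s1)%nat with 0%nat by lia.
    rewrite !firstn_O, !app_nil_r. reflexivity.
  - rewrite sumf_seq_shift. apply sumf_ext. intros t _. simpl plus.
    replace (S (length s1 + t)) with (length s1 + S t)%nat by lia.
    rewrite !firstn_app_2, !app_assoc. reflexivity.
Qed.

Lemma move_cost_during_single A h u : move_cost_during A h [u] = move_cost A h (h ++ [u]).
Proof.
  unfold move_cost_during. cbn [length seq firstn]. rewrite sumf_cons, sumf_nil, app_nil_r. simpl firstn. lra.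
Qed.

Lemma total_move_snoc A h u : total_move A (h ++ [u]) = total_move A h + move_cost A h (h ++ [u]).
Proof.
  change (total_move A (h ++ [u])) with (move_cost_during A [] (h ++ [u])).
  rewrite move_cost_during_app, move_cost_during_single. reflexivity.
Qed.

Lemma move_cost_as_sumf A prev next : move_cost A prev next =
  sumf snd (filter (fun p => existsb (fun q => Nat.eqb (fst q) (fst p)) (cur next)
                               && negb (Nat.eqb (A prev (fst p)) (A next (fst p)))) (cur prev)).
Proof. reflexivity. Qed.

Lemma move_cost_unmoved A prev next :
  (forall p, In p (cur prev) -> A prev (fst p) = A next (fst p)) -> move_cost A prev next = 0.
Proof.
  intros H. rewrite move_cost_as_sumf. apply sumf_filter_false. intros p Hp.
  rewrite (H p Hp), Nat.eqb_refl, andb_false_r. auto.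
Qed.

Lemma move_cost_le_volume A prev next :
  (forall x, In x (cur prev) -> 0 <= snd x) -> move_cost A prev next <= sumf snd (cur prev).
Proof. intros Hn. rewrite move_cost_as_sumf. apply sumf_filter_le; auto. Qed.

Lemma moved_volume_le_move_cost A prev next P :
  NoDup P -> incl P (cur prev) -> incl P (cur next) -> (forall x, In x (cur prev) -> 0 <= snd x) ->
  sumf (fun x => snd x * moved A prev next x) P <= move_cost A prev next.
Proof.
  intros ND H1 H2 Hn. rewrite move_cost_as_sumf, sumf_filter.
  eapply Rle_trans; [|apply sumf_incl; eauto].
  - apply Req_le, sumf_ext. intros x Hx.
    assert (E : existsb (fun q => Nat.eqb (fst q) (fst x)) (cur next) = true)
      by (apply existsb_exists; exists x; split; auto; apply Nat.eqb_refl).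
    rewrite E. unfold moved. destruct (negb _); simpl; lra.
  - intros x Hx. specialize (Hn x Hx). destruct (_ && _); lra.
Qed.

(* Items present throughout [s]: by the triangle inequality for [moved], the net displacement
   between the ends is paid for step by step. *)
Lemma moved_volume_le_move_cost_during A h s P : NoDup P ->
  (forall t, (t <= length s)%nat -> incl P (cur (h ++ firstn t s))) ->
  (forall t x, (t <= length s)%nat -> In x (cur (h ++ firstn t s)) -> 0 <= snd x) ->
  sumf (fun x => snd x * moved A h (h ++ s) x) P <= move_cost_during A h s.
Proof.
  intros ND. induction s as [|u s IH] using rev_ind; intros Hin Hn.
  - rewrite app_nil_r. unfold move_cost_during. cbn [length seq]. rewrite sumf_nil.
    apply Req_le. transitivity (sumf (fun _ => 0) P); [|apply sumf_zero]. apply sumf_ext. intros x _.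
    unfold moved. rewrite Nat.eqb_refl. simpl; lra.
  - assert (Hs : forall t, (t <= length s)%nat -> firstn t (s ++ [u]) = firstn t s).
    { intros t Ht. rewrite firstn_app. replace (t - length s)%nat with 0%nat by lia.
      rewrite firstn_O, app_nil_r; auto. }
    assert (Hl : length (s ++ [u]) = S (length s)) by (rewrite length_app; simpl; lia).
    assert (Hprev : forall t, (t <= length s)%nat -> incl P (cur (h ++ firstn t s)))
      by (intros t Ht; rewrite <- Hs by auto; apply Hin; lia).
    assert (Hprevn : forall t x, (t <= length s)%nat -> In x (cur (h ++ firstn t s)) -> 0 <= snd x)
      by (intros t x Ht; rewrite <- Hs by auto; apply Hn; lia).
    assert (Hlast : incl P (cur ((h ++ s) ++ [u]))).
    { rewrite <- app_assoc, <- (firstn_all (s ++ [u])). apply Hin; lia. }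
    pose proof (Hprev (length s) (le_n _)) as Hmid. pose proof (Hprevn (length s)) as Hmidn.
    rewrite firstn_all in Hmid, Hmidn.
    pose proof (moved_volume_le_move_cost A (h ++ s) ((h ++ s) ++ [u]) P ND Hmid Hlast
      (fun x => Hmidn x (le_n _))) as Hstep.
    rewrite move_cost_during_app, move_cost_during_single, <- app_assoc.
    rewrite <- app_assoc in Hstep.
    eapply Rle_trans; [|apply Rplus_le_compat; [exact (IH Hprev Hprevn)|exact Hstep]].
    rewrite <- sumf_plus. apply sumf_le. intros x Hx.
    assert (0 <= snd x) by (apply (Hmidn x (le_n _)), Hmid; auto).
    pose proof (moved_triangle A h (h ++ s) (h ++ s ++ [u]) x). nra.
Qed.

Lemma move_cost_during_nonneg A h s : wf (h ++ s) -> 0 <= move_cost_during A h s.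
Proof.
  intros Hw. pose proof (moved_volume_le_move_cost_during A h s [] (NoDup_nil _)) as H.
  rewrite sumf_nil in H. apply H; [intros t _ x []|].
  intros t x Ht Hx. apply (wf_cur_sizes (h ++ firstn t s)); auto.
  apply (wf_prefix _ (skipn t s)). rewrite <- app_assoc, firstn_skipn. auto.
Qed.

Definition update_cost (l : list (nat * R)) (u : update) : R :=
  match u with Ins _ s => s | Del i => sumf snd (filter (fun p => Nat.eqb (fst p) i) l) end.

Lemma upd_cost_cur h u : upd_cost h u = update_cost (cur h) u.
Proof. reflexivity. Qed.

Lemma update_cost_nonneg l u : (forall x, In x l -> 0 <= snd x) ->
  (match u with Ins _ s => 0 <= s | _ => True end) -> 0 <= update_cost l u.
Proof.
  intros Hn Hu. destruct u; simpl; auto. apply sumf_nonneg.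
  intros x Hx. apply filter_In in Hx. apply Hn; tauto.
Qed.

Lemma total_cost_as_sumf s :
  total_cost s = sumf (fun t => upd_cost (firstn t s) (nth t s (Del 0))) (seq 0 (length s)).
Proof. reflexivity. Qed.

Lemma total_cost_snoc h u : total_cost (h ++ [u]) = total_cost h + upd_cost h u.
Proof.
  rewrite !total_cost_as_sumf, length_app. simpl length. rewrite seq_app, sumf_app. simpl seq.
  rewrite sumf_cons, sumf_nil. f_equal.
  - apply sumf_ext. intros t Ht. apply in_seq in Ht. rewrite app_nth1 by lia. rewrite firstn_app.
    replace (t - length h)%nat with 0%nat by lia. rewrite firstn_O, app_nil_r. auto.
  - rewrite nth_middle. simpl plus. rewrite firstn_app, Nat.sub_diag, firstn_O, app_nil_r, firstn_all. lra.
Qed.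

Lemma total_cost_nonneg h : wf h -> 0 <= total_cost h.
Proof.
  induction h as [|u h IH] using rev_ind; intros Hw; [unfold total_cost; simpl; lra|].
  rewrite total_cost_snoc, upd_cost_cur. pose proof (wf_last h u Hw) as Hl.
  assert (0 <= update_cost (cur h) u).
  { apply update_cost_nonneg; [|destruct u; auto; tauto].
    intros x Hx. apply (wf_cur_sizes h (wf_prefix h [u] Hw)); auto. }
  specialize (IH (wf_prefix h [u] Hw)). lra.
Qed.

(** * The algorithm: lazy updates and periodic optimal repacking *)

Lemma bin_load_ext L g g' b :
  (forall x, In x L -> g (fst x) = g' (fst x)) -> bin_load L g b = bin_load L g' b.
Proof. intros H. unfold bin_load. f_equal. apply filter_ext_in. intros x Hx. rewrite H; auto. Qed.

Lemma bin_load_split (P : nat -> bool) L g b :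
  bin_load L g b = bin_load (filter (fun x => P (fst x)) L) g b
    + bin_load (filter (fun x => negb (P (fst x))) L) g b.
Proof.
  unfold bin_load. rewrite !filter_filter_andb, !sumf_filter, <- sumf_plus.
  apply sumf_ext. intros x _. destruct (P (fst x)), (Nat.eqb _ b); simpl; lra.
Qed.

Lemma packs_app_r L1 L2 g k : (forall x, In x L1 -> 0 <= snd x) -> packs (L1 ++ L2) g k -> packs L2 g k.
Proof.
  intros Hn [H1 H2]. split; [intros x Hx; apply H1, in_or_app; auto|].
  intros b. specialize (H2 b). rewrite bin_load_app in H2.
  pose proof (bin_load_nonneg L1 g b Hn). lra.
Qed.

Lemma packs_split (P : nat -> bool) L g1 k1 g2 k2 :
  packs (filter (fun x => P (fst x)) L) g1 k1 -> packs (filter (fun x => negb (P (fst x))) L) g2 k2 ->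
  packs L (fun i => if P i then g1 i else (k1 + g2 i)%nat) (k1 + k2).
Proof.
  intros [G1a G1b] [G2a G2b]. set (g := fun i => if P i then g1 i else (k1 + g2 i)%nat).
  assert (E1 : forall b, bin_load (filter (fun x => P (fst x)) L) g b
    = bin_load (filter (fun x => P (fst x)) L) g1 b).
  { intros b. apply bin_load_ext. intros x Hx. apply filter_In in Hx as [_ Hx]. unfold g. rewrite Hx. auto. }
  assert (E2 : forall b, bin_load (filter (fun x => negb (P (fst x))) L) g b
                       = bin_load (filter (fun x => negb (P (fst x))) L) (fun i => k1 + g2 i)%nat b).
  { intros b. apply bin_load_ext. intros x Hx. apply filter_In in Hx as [_ Hx]. unfold g.
    destruct (P (fst x)); auto; discriminate. }
  apply packs_intro.
  - intros x Hx. unfold g. destruct (P (fst x)) eqn:HP.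
    + specialize (G1a x ltac:(apply filter_In; auto)). lia.
    + specialize (G2a x ltac:(apply filter_In; rewrite HP; auto)). lia.
  - intros b Hb. rewrite (bin_load_split P), E1, E2.
    destruct (Nat.lt_ge_cases b k1) as [Hb1|Hb1].
    + rewrite (bin_load_empty (filter _ L) (fun i => k1 + g2 i)%nat); [specialize (G1b b); lra|].
      intros x _. lia.
    + rewrite (bin_load_empty (filter _ L) g1); [|intros x Hx; specialize (G1a x Hx); lia].
      replace (bin_load _ (fun i => k1 + g2 i)%nat b) with
        (bin_load (filter (fun x => negb (P (fst x))) L) g2 (b - k1)).
      * specialize (G2b (b - k1)%nat). lra.
      * unfold bin_load. f_equal. apply filter_ext. intros x. apply eq_true_iff_eq. rewrite !Nat.eqb_eq. lia.
Qed.

(* [st_base] is the item set at the last repacking, packed optimally into bins [0, st_base_bins);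
   items inserted since then ([st_new]) go by Next Fit into the bins from [st_base_bins] on,
   the open one being [st_base_bins + st_nf_bin]; [st_cost] is the update cost since the last
   repacking and [st_ins_vol] the volume inserted since then. *)
Record state := mkState {
  st_lab : nat -> nat;
  st_base : list (nat * R);
  st_base_bins : nat;
  st_base_vol : R;
  st_cost : R;
  st_ins_vol : R;
  st_nf_bin : nat;
  st_nf_level : R;
  st_alive : nat -> bool;
  st_new : list (nat * R) }.

Definition repack (l : list (nat * R)) : state :=
  mkState (optimal_labeling l) l (OPT (map snd l)) (sumf snd l) 0 0 0 0 (fun _ => true) [].

Definition next_fit_slot (b : nat) (level s : R) : nat * R :=
  if Rle_dec (level + s) 1 then (b, level + s) else (S b, s).

Definition lazy_update (q : state) (l : list (nat * R)) (u : update) : state :=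
  match u with
  | Ins i s =>
    let nf := next_fit_slot (st_nf_bin q) (st_nf_level q) s in
    mkState (fupd (st_lab q) i (st_base_bins q + fst nf)) (st_base q) (st_base_bins q) (st_base_vol q)
      (st_cost q + s) (st_ins_vol q + s) (fst nf) (snd nf)
      (fun j => st_alive q j && negb (Nat.eqb j i)) ((i, s) :: drop_id i (st_new q))
  | Del i =>
    mkState (st_lab q) (st_base q) (st_base_bins q) (st_base_vol q)
      (st_cost q + update_cost l u) (st_ins_vol q) (st_nf_bin q) (st_nf_level q)
      (fun j => st_alive q j && negb (Nat.eqb j i)) (drop_id i (st_new q))
  end.

Definition transition (d : R) (q : state) (l : list (nat * R)) (u : update) : state :=
  if Rle_dec (d * st_base_vol q) (st_cost q + update_cost l u) then repack (step l u) else lazy_update q l u.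

Definition init_state : state := mkState (fun _ => 0%nat) [] 0 0 0 0 0 0 (fun _ => true) [].

Definition run (d : R) (h : list update) : state * list (nat * R) :=
  fold_left (fun p u => (transition d (fst p) (snd p) u, step (snd p) u)) h (init_state, []).

Definition alg (d : R) : algorithm := fun h i => st_lab (fst (run d h)) i.

Lemma run_cur d h : snd (run d h) = cur h.
Proof.
  induction h as [|u h IH] using rev_ind; auto.
  unfold run in *. rewrite fold_left_app, cur_snoc. simpl. rewrite IH. auto.
Qed.

Lemma run_snoc d h u : fst (run d (h ++ [u])) = transition d (fst (run d h)) (cur h) u.
Proof. rewrite <- (run_cur d h). unfold run. rewrite fold_left_app. reflexivity. Qed.

Definition alive_base (q : state) := filter (fun x => st_alive q (fst x)) (st_base q).
Definition deleted_base (q : state) := filter (fun x => negb (st_alive q (fst x))) (st_base q).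

Record invariant (d : R) (h : list update) (q : state) : Prop := {
  inv_cur : cur h = st_new q ++ alive_base q;
  inv_base_nodup : NoDup (map fst (st_base q));
  inv_base_sizes : forall x, In x (st_base q) -> 0 <= snd x <= 1;
  inv_base_bins_min : forall k, packable (map snd (st_base q)) k -> (st_base_bins q <= k)%nat;
  inv_base_lab : forall x, In x (alive_base q) -> (st_lab q (fst x) < st_base_bins q)%nat;
  inv_base_load : forall b, bin_load (alive_base q) (st_lab q) b <= 1;
  inv_new_lab : forall x, In x (st_new q) ->
    (st_base_bins q <= st_lab q (fst x) <= st_base_bins q + st_nf_bin q)%nat;
  inv_new_load : forall b, bin_load (st_new q) (st_lab q) b <= 1;
  inv_nf_load : bin_load (st_new q) (st_lab q) (st_base_bins q + st_nf_bin q) <= st_nf_level q;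
  inv_nf_level : 0 <= st_nf_level q <= 1;
  inv_nf_bins : INR (st_nf_bin q) + st_nf_level q <= 2 * st_ins_vol q;
  inv_base_vol : st_base_vol q = sumf snd (st_base q);
  inv_vol : sumf snd (cur h) <= st_base_vol q + st_cost q;
  inv_cost : sumf snd (deleted_base q) + st_ins_vol q <= st_cost q;
  inv_ins_vol : 0 <= st_ins_vol q;
  inv_cost_budget : st_cost q <= d * st_base_vol q;
  inv_move : total_move (alg d) h <= (1 + / d) * (total_cost h - st_cost q)
}.

Lemma next_fit_slot_spec b level s (ld : nat -> R) :
  0 <= level <= 1 -> 0 <= s <= 1 -> ld b <= level -> ld (S b) = 0 ->
  (b <= fst (next_fit_slot b level s) <= S b)%nat /\
  ld (fst (next_fit_slot b level s)) + s <= snd (next_fit_slot b level s) /\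
  0 <= snd (next_fit_slot b level s) <= 1 /\
  INR (fst (next_fit_slot b level s)) + snd (next_fit_slot b level s) <= INR b + level + 2 * s.
Proof.
  intros Hl Hs Hb HSb. unfold next_fit_slot.
  destruct (Rle_dec (level + s) 1); cbn [fst snd]; rewrite ?S_INR; repeat split; lia || lra.
Qed.

Definition update_id (u : update) : nat := match u with Ins i _ => i | Del i => i end.

Lemma alive_base_lazy q l u : alive_base (lazy_update q l u) = drop_id (update_id u) (alive_base q).
Proof. unfold alive_base. destruct u; simpl; rewrite drop_id_filter; reflexivity. Qed.

Lemma deleted_base_lazy q l u :
  sumf snd (deleted_base (lazy_update q l u))
  = sumf snd (deleted_base q) + sumf snd (filter (fun x => Nat.eqb (fst x) (update_id u)) (alive_base q)).
Proof.
  unfold deleted_base, alive_base. rewrite filter_filter_andb, !sumf_filter, <- sumf_plus.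
  destruct u; cbn [lazy_update st_base st_alive update_id]; apply sumf_ext; intros x _;
  destruct (st_alive q (fst x)), (Nat.eqb (fst x) _); simpl; lra.
Qed.

Lemma alive_base_repack l : alive_base (repack l) = l.
Proof. apply filter_true. Qed.

Lemma deleted_base_repack l : deleted_base (repack l) = [].
Proof. apply filter_false. Qed.

Section Invariant.

Variable d : R.
Hypothesis d_pos : 0 < d.

Lemma invariant_init : invariant d [] init_state.
Proof.
  constructor; unfold alive_base, deleted_base, bin_load, cur, total_move, total_cost; simpl;
    rewrite ?sumf_nil; try constructor; try (intros; contradiction); try (intros; lia); lra.
Qed.

Lemma invariant_sizes h q : wf h -> invariant d h q ->
  (forall x, In x (st_new q) -> 0 <= snd x <= 1) /\ (forall x, In x (alive_base q) -> 0 <= snd x <= 1).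
Proof.
  intros Hw I. split; intros x Hx; apply (wf_cur_sizes h Hw); rewrite (inv_cur _ _ _ I); apply in_or_app;
    auto.
Qed.

Lemma invariant_repack h u q : wf (h ++ [u]) -> invariant d h q ->
  d * st_base_vol q <= st_cost q + update_cost (cur h) u ->
  invariant d (h ++ [u]) (repack (cur (h ++ [u]))).
Proof.
  intros Hw I Trig.
  assert (Hs : forall x, In x (cur h) -> 0 <= snd x <= 1) by apply (wf_cur_sizes h (wf_prefix h [u] Hw)).
  assert (Hs' : forall x, In x (cur (h ++ [u])) -> 0 <= snd x <= 1) by (apply wf_cur_sizes; auto).
  assert (Hc : 0 <= update_cost (cur h) u).
  { apply update_cost_nonneg; [intros x Hx; apply Hs; auto|]. pose proof (wf_last h u Hw).
    destruct u; auto; tauto. }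
  pose proof (optimal_labeling_packs (cur (h ++ [u])) (NoDup_fst_cur _) Hs') as [P1 P2].
  pose proof (inv_cost _ _ _ I). pose proof (inv_ins_vol _ _ _ I).
  assert (0 <= sumf snd (deleted_base q))
    by (apply sumf_nonneg; intros x Hx; apply filter_In in Hx; apply (inv_base_sizes _ _ _ I); tauto).
  assert (0 <= sumf snd (cur (h ++ [u]))) by (apply sumf_nonneg; intros x Hx; apply Hs'; auto).
  constructor; simpl; rewrite ?alive_base_repack, ?deleted_base_repack, ?app_nil_l, ?sumf_nil;
    try solve [auto | lra | intros x [] | intros; apply OPT_le; auto | apply NoDup_fst_cur
              | unfold bin_load; simpl; intros; rewrite ?sumf_nil; lra | nra].
  (* The repacking moves at most the current volume, which the cost since the last repacking pays for. *)
  rewrite total_move_snoc, total_cost_snoc, upd_cost_cur.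
  pose proof (inv_move _ _ _ I) as T. pose proof (inv_vol _ _ _ I) as V.
  pose proof (move_cost_le_volume (alg d) h (h ++ [u]) ltac:(intros x Hx; apply Hs; auto)) as MC.
  assert (Vb : st_base_vol q <= / d * (st_cost q + update_cost (cur h) u)).
  { apply (Rmult_le_reg_l d); auto. rewrite <- Rmult_assoc, Rinv_r, Rmult_1_l by lra. lra. }
  assert (0 <= / d * update_cost (cur h) u) by (apply Rmult_le_pos; [apply Rlt_le, Rinv_0_lt_compat|]; auto).
  nra.
Qed.

Lemma lazy_update_unmoved h u :
  wf (h ++ [u]) -> transition d (fst (run d h)) (cur h) u = lazy_update (fst (run d h)) (cur h) u ->
  total_move (alg d) (h ++ [u]) = total_move (alg d) h.
Proof.
  intros Hw E. rewrite total_move_snoc, move_cost_unmoved; [lra|].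
  intros p Hp. unfold alg at 2. rewrite run_snoc, E. pose proof (wf_last h u Hw) as Hl.
  destruct u as [i s|i]; simpl; auto. unfold fupd.
  destruct (Nat.eqb_spec (fst p) i) as [<-|]; auto. exfalso. apply Hl, present_in; auto.
Qed.

Lemma alive_base_fresh h q i : invariant d h q -> ~ present i (cur h) ->
  forall x, In x (alive_base q) -> fst x <> i.
Proof.
  intros I Hfresh x Hx <-. apply Hfresh. rewrite (inv_cur _ _ _ I). apply present_in, in_or_app. auto.
Qed.

Lemma invariant_lazy_insert h i s q : wf (h ++ [Ins i s]) -> invariant d h q ->
  st_cost q + s < d * st_base_vol q -> total_move (alg d) (h ++ [Ins i s]) = total_move (alg d) h ->
  invariant d (h ++ [Ins i s]) (lazy_update q (cur h) (Ins i s)).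
Proof.
  intros Hw I Lazy Move. pose proof (wf_last h _ Hw) as [Hsz Hfresh].
  pose proof (alive_base_fresh h q i I Hfresh) as Hi.
  destruct (invariant_sizes h q (wf_prefix h _ Hw) I) as [Hnew _].
  set (nf := next_fit_slot (st_nf_bin q) (st_nf_level q) s).
  set (lab' := fupd (st_lab q) i (st_base_bins q + fst nf)).
  assert (Halive : drop_id i (alive_base q) = alive_base q)
    by (apply drop_id_notin; intros Hin; apply in_map_iff in Hin as (x & <- & Hx); apply (Hi x); auto).
  assert (Hlab_alive : forall x, In x (alive_base q) -> lab' (fst x) = st_lab q (fst x)).
  { intros x Hx. unfold lab', fupd. rewrite (proj2 (Nat.eqb_neq _ _) (Hi x Hx)). auto. }
  assert (Hload : forall b, bin_load ((i, s) :: drop_id i (st_new q)) lab' b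
                            <= (if Nat.eqb (st_base_bins q + fst nf) b then s else 0)
                              + bin_load (st_new q) (st_lab q) b)
    by (intros; apply bin_load_insert; intros; apply Hnew; auto).
  destruct (next_fit_slot_spec (st_nf_bin q) (st_nf_level q) s
              (fun j => bin_load (st_new q) (st_lab q) (st_base_bins q + j)))
    as (NF1 & NF2 & NF3 & NF4); [apply (inv_nf_level _ _ _ I) | auto | apply (inv_nf_load _ _ _ I) | |].
  { apply bin_load_empty. intros x Hx. pose proof (inv_new_lab _ _ _ I x Hx). lia. }
  fold nf in NF1, NF2, NF3, NF4.
  assert (Del0 : sumf snd (filter (fun x => Nat.eqb (fst x) i) (alive_base q)) = 0)
    by (apply sumf_filter_false; intros x Hx; apply Nat.eqb_neq, Hi; auto).
  pose proof (deleted_base_lazy q (cur h) (Ins i s)) as Edel. simpl update_id in Edel.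
  pose proof (sumf_step_ins_le (cur h) i s
    ltac:(intros x Hx; apply (wf_cur_sizes h (wf_prefix h _ Hw)); auto)).
  pose proof (inv_cost _ _ _ I). pose proof (inv_nf_bins _ _ _ I). pose proof (inv_ins_vol _ _ _ I).
  pose proof (inv_vol _ _ _ I). pose proof (inv_move _ _ _ I).
  constructor; rewrite ?alive_base_lazy, ?Edel, ?Del0; simpl; fold nf lab'; rewrite ?Halive;
    try solve [apply (inv_base_nodup _ _ _ I) | apply (inv_base_sizes _ _ _ I)
               | apply (inv_base_bins_min _ _ _ I) | apply (inv_base_vol _ _ _ I) | auto | lra].
  - rewrite cur_snoc, (inv_cur _ _ _ I). simpl. rewrite drop_id_app, Halive. reflexivity.
  - intros x Hx. rewrite Hlab_alive by auto. apply (inv_base_lab _ _ _ I); auto.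
  - intros b. rewrite (bin_load_ext _ _ (st_lab q)) by auto. apply (inv_base_load _ _ _ I).
  - intros x [<-|Hx]; [unfold lab', fupd; simpl; rewrite Nat.eqb_refl; lia|].
    apply in_drop_id in Hx as [Hx Hne]. unfold lab', fupd. apply Nat.eqb_neq in Hne. rewrite Hne.
    pose proof (inv_new_lab _ _ _ I x Hx). lia.
  - intros b. eapply Rle_trans; [apply Hload|].
    destruct (Nat.eqb_spec (st_base_bins q + fst nf) b) as [<-|]; [lra|].
    pose proof (inv_new_load _ _ _ I b). lra.
  - eapply Rle_trans; [apply Hload|]. rewrite Nat.eqb_refl. lra.
  - rewrite cur_snoc. lra.
  - rewrite Move, total_cost_snoc. simpl. lra.
Qed.

Lemma invariant_lazy_delete h i q : wf (h ++ [Del i]) -> invariant d h q ->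
  st_cost q + update_cost (cur h) (Del i) < d * st_base_vol q ->
  total_move (alg d) (h ++ [Del i]) = total_move (alg d) h ->
  invariant d (h ++ [Del i]) (lazy_update q (cur h) (Del i)).
Proof.
  intros Hw I Lazy Move. set (c := update_cost (cur h) (Del i)) in *.
  destruct (invariant_sizes h q (wf_prefix h _ Hw) I) as [Hnew Halive].
  assert (Hnew0 : forall x, In x (st_new q) -> 0 <= snd x) by (intros; apply Hnew; auto).
  assert (Halive0 : forall x, In x (alive_base q) -> 0 <= snd x) by (intros; apply Halive; auto).
  assert (Hc : sumf snd (filter (fun x => Nat.eqb (fst x) i) (alive_base q)) <= c).
  { unfold c. simpl. rewrite (inv_cur _ _ _ I), filter_app, sumf_app.
    assert (0 <= sumf snd (filter (fun x => Nat.eqb (fst x) i) (st_new q)))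
      by (apply sumf_nonneg; intros x Hx; apply filter_In in Hx; apply Hnew0; tauto).
    lra. }
  assert (Hvol : sumf snd (cur (h ++ [Del i])) <= sumf snd (cur h))
    by (rewrite cur_snoc; apply sumf_step_del_le; intros x Hx; apply (wf_cur_sizes h (wf_prefix h _ Hw));
      auto).
  assert (0 <= c)
    by (apply update_cost_nonneg; auto; intros x Hx; apply (wf_cur_sizes h (wf_prefix h _ Hw)); auto).
  pose proof (deleted_base_lazy q (cur h) (Del i)) as Edel. simpl update_id in Edel.
  pose proof (inv_cost _ _ _ I). pose proof (inv_vol _ _ _ I). pose proof (inv_move _ _ _ I).
  constructor; rewrite ?alive_base_lazy, ?Edel;
    cbn [lazy_update update_id st_lab st_base st_base_bins st_base_vol st_cost st_ins_vol st_nf_bin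
      st_nf_level st_new];
    fold c; try solve [apply (inv_base_nodup _ _ _ I) | apply (inv_base_sizes _ _ _ I)
                       | apply (inv_base_bins_min _ _ _ I) | apply (inv_base_vol _ _ _ I)
                       | apply (inv_nf_level _ _ _ I) | apply (inv_nf_bins _ _ _ I)
                       | apply (inv_ins_vol _ _ _ I) | lra].
  - rewrite cur_snoc, (inv_cur _ _ _ I). apply drop_id_app.
  - intros x Hx. apply in_drop_id in Hx as [Hx _]. apply (inv_base_lab _ _ _ I); auto.
  - intros b. pose proof (inv_base_load _ _ _ I b).
    pose proof (bin_load_drop_id_le i _ (st_lab q) b Halive0). lra.
  - intros x Hx. apply in_drop_id in Hx as [Hx _]. apply (inv_new_lab _ _ _ I); auto.
  - intros b. pose proof (inv_new_load _ _ _ I b).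
    pose proof (bin_load_drop_id_le i _ (st_lab q) b Hnew0). lra.
  - pose proof (inv_nf_load _ _ _ I).
    pose proof (bin_load_drop_id_le i _ (st_lab q) (st_base_bins q + st_nf_bin q) Hnew0). lra.
  - rewrite Move, total_cost_snoc, upd_cost_cur. fold c. lra.
Qed.

Lemma invariant_run h : wf h -> invariant d h (fst (run d h)).
Proof.
  induction h as [|u h IH] using rev_ind; intros Hw; [apply invariant_init|].
  pose proof (IH (wf_prefix h _ Hw)) as I. set (q := fst (run d h)) in *.
  rewrite run_snoc. fold q. unfold transition.
  destruct (Rle_dec (d * st_base_vol q) (st_cost q + update_cost (cur h) u)) as [Trig|Lazy].
  - rewrite <- cur_snoc. apply (invariant_repack h u q); auto.
  - assert (Move : total_move (alg d) (h ++ [u]) = total_move (alg d) h).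
    { apply lazy_update_unmoved; auto. fold q. unfold transition. destruct Rle_dec; [contradiction|auto]. }
    apply Rnot_le_lt in Lazy.
    destruct u as [i s|i]; [apply invariant_lazy_insert | apply invariant_lazy_delete]; auto.
Qed.

End Invariant.

Section Bounds.

Variable d : R.
Hypothesis d_pos : 0 < d.

Lemma alg_load h b : load (alg d) h b = bin_load (cur h) (st_lab (fst (run d h))) b.
Proof. reflexivity. Qed.

Lemma alg_valid : valid_alg (alg d).
Proof.
  intros h Hw b. pose proof (invariant_run d d_pos h Hw) as I. set (q := fst (run d h)) in *.
  rewrite alg_load. fold q. rewrite (inv_cur _ _ _ I), bin_load_app.
  destruct (Nat.lt_ge_cases b (st_base_bins q)) as [Hb|Hb].
  - rewrite bin_load_empty; [pose proof (inv_base_load _ _ _ I b); lra|].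
    intros x Hx. pose proof (inv_new_lab _ _ _ I x Hx). lia.
  - rewrite (bin_load_empty (alive_base q)); [pose proof (inv_new_load _ _ _ I b); lra|].
    intros x Hx. pose proof (inv_base_lab _ _ _ I x Hx). lia.
Qed.

Lemma alg_bins_used_le h : wf h ->
  (bins_used (alg d) h <= S (st_base_bins (fst (run d h)) + st_nf_bin (fst (run d h))))%nat.
Proof.
  intros Hw. pose proof (invariant_run d d_pos h Hw) as I. set (q := fst (run d h)) in *.
  apply (length_labels_le (fun p => st_lab q (fst p))).
  intros x Hx. rewrite (inv_cur _ _ _ I) in Hx. apply in_app_or in Hx as [Hx|Hx].
  - pose proof (inv_new_lab _ _ _ I x Hx). lia.
  - pose proof (inv_base_lab _ _ _ I x Hx). lia.
Qed.

(* The surviving base items fit in OPT bins and the deleted ones, of volume D, by Next Fit in at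
   most 2D + 1 more. *)
Lemma base_bins_le h : wf h ->
  INR (st_base_bins (fst (run d h)))
  <= INR (OPT (sizes h)) + 2 * sumf snd (deleted_base (fst (run d h))) + 1.
Proof.
  intros Hw. pose proof (invariant_run d d_pos h Hw) as I. set (q := fst (run d h)) in *.
  assert (Hs := wf_cur_sizes h Hw).
  destruct (packable_packs (cur h) (OPT (sizes h)) (NoDup_fst_cur h) (OPT_packable _ (NoDup_fst_cur h) Hs))
    as (g1 & G1).
  rewrite (inv_cur _ _ _ I) in G1. apply packs_app_r in G1;
    [|intros x Hx; apply Hs; rewrite (inv_cur _ _ _ I); apply in_or_app; auto].
  destruct (next_fit_packs (deleted_base q)) as (g2 & k2 & G2 & Hk2).
  { apply NoDup_fst_filter, (inv_base_nodup _ _ _ I). }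
  { intros x Hx. apply filter_In in Hx. apply (inv_base_sizes _ _ _ I); tauto. }
  pose proof (packs_split (st_alive q) (st_base q) g1 _ g2 k2 G1 G2) as G.
  pose proof (inv_base_bins_min _ _ _ I _ (packs_packable _ _ _ G)) as Hk0.
  apply le_INR in Hk0. rewrite plus_INR in Hk0. lra.
Qed.

Lemma alg_competitive h : d <= 1/2 -> wf h ->
  INR (bins_used (alg d) h) <= (1 + 4 * d) * INR (OPT (sizes h)) + 2.
Proof.
  intros Hd Hw. pose proof (invariant_run d d_pos h Hw) as I.
  pose proof (alg_bins_used_le h Hw) as B. pose proof (base_bins_le h Hw) as K.
  set (q := fst (run d h)) in *. apply le_INR in B. rewrite S_INR, plus_INR in B.
  set (On := INR (OPT (sizes h))) in *.
  pose proof (inv_nf_bins _ _ _ I). pose proof (inv_nf_level _ _ _ I). pose proof (inv_cost _ _ _ I).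
  set (D := sumf snd (deleted_base q)) in *.
  pose proof (inv_cost_budget _ _ _ I).
  assert (Hs := wf_cur_sizes h Hw).
  assert (Halive : sumf snd (alive_base q) <= On).
  { eapply Rle_trans; [|apply (volume_le_OPT (cur h) (NoDup_fst_cur h) Hs)].
    rewrite (inv_cur _ _ _ I), sumf_app.
    assert (0 <= sumf snd (st_new q))
      by (apply sumf_nonneg; intros x Hx; apply Hs; rewrite (inv_cur _ _ _ I); apply in_or_app; auto).
    lra. }
  assert (HV : st_base_vol q <= On + D).
  { rewrite (inv_base_vol _ _ _ I), (sumf_filter_split snd (fun x => st_alive q (fst x))).
    change (sumf snd (alive_base q) + D <= On + D). lra. }
  assert (0 <= D)
    by (apply sumf_nonneg; intros x Hx; apply filter_In in Hx; apply (inv_base_sizes _ _ _ I); tauto).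
  pose proof (inv_ins_vol _ _ _ I).
  assert (HU : st_cost q <= 2 * d * On) by nra.
  nra.
Qed.

Lemma alg_recourse h : wf h -> total_move (alg d) h <= (1 + / d) * total_cost h.
Proof.
  intros Hw. pose proof (invariant_run d d_pos h Hw) as I.
  pose proof (inv_move _ _ _ I). pose proof (inv_cost _ _ _ I). pose proof (inv_ins_vol _ _ _ I).
  assert (0 <= sumf snd (deleted_base (fst (run d h))))
    by (apply sumf_nonneg; intros x Hx; apply filter_In in Hx; apply (inv_base_sizes _ _ _ I); tauto).
  assert (0 < / d) by (apply Rinv_0_lt_compat; auto).
  nra.
Qed.

End Bounds.

Theorem upper_bound : exists C1 C2 : R, 0 < C1 /\ 0 < C2 /\
  forall eps : R, 0 < eps <= 1 ->
    exists A : algorithm, valid_alg A /\ competitive A (1 + eps) (C1 / eps ^ 2) /\ recourse A (C2 / eps).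
Proof.
  exists 2, 5. split; [lra|]. split; [lra|]. intros eps He.
  assert (Hd : 0 < eps / 4) by lra.
  assert (Hinv : / (eps / 4) = 4 / eps) by (field; lra).
  assert (Heps2 : 2 <= 2 / eps ^ 2).
  { apply (Rmult_le_reg_r (eps ^ 2)); [nra|]. unfold Rdiv. rewrite Rmult_assoc, Rinv_l by nra. nra. }
  assert (Hrec : 1 + 4 / eps <= 5 / eps).
  { apply (Rmult_le_reg_r eps); [lra|]. unfold Rdiv. rewrite Rmult_plus_distr_r, !Rmult_assoc, Rinv_l by lra.
    lra. }
  exists (alg (eps / 4)). split; [|split].
  - apply alg_valid; auto.
  - intros h Hw. pose proof (alg_competitive _ Hd h ltac:(lra) Hw) as Hcomp.
    replace (1 + 4 * (eps / 4)) with (1 + eps) in Hcomp by field. lra.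
  - intros h Hw. pose proof (alg_recourse _ Hd h Hw) as Hmove. pose proof (total_cost_nonneg h Hw).
    rewrite Hinv in Hmove. nra.
Qed.

(** * The adversary *)

(* Kinds 0, 1 are the big items, 2, 3 the medium ones, 4 the small items of phase A and 5, 6 the
   gadgets of phase B. Each of {0,2,4}, {1,3,4} and {0,3,6}, {1,2,5} fills a bin exactly. *)
Definition kind_size (c : R) (k : nat) : R :=
  match k with
  | 0 => 1/2 + c
  | 1 => 1/2 + c + 3*c/5
  | 2 => 1/2 - 2*c
  | 3 => 1/2 - 2*c - 3*c/5
  | 4 => c
  | 5 => 2*c/5
  | 6 => 8*c/5
  | _ => 0
  end.

Definition counts_load c n0 n1 n2 n3 n4 n5 n6 :=
  kind_size c 0 * INR n0 + kind_size c 1 * INR n1 + kind_size c 2 * INR n2 + kind_size c 3 * INR n3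
  + kind_size c 4 * INR n4 + kind_size c 5 * INR n5 + kind_size c 6 * INR n6.

Definition matched (n0 n1 n2 n3 : nat) : bool :=
  ((1 <=? n0) && (1 <=? n2)) || ((1 <=? n1) && (1 <=? n3)).

Lemma counts_load_ge c n0 n1 n2 n3 n4 n5 n6 : 0 < c <= 1/40 ->
  (1/2 + c) * INR (n0 + n1) + 2/5 * INR (n2 + n3) <= counts_load c n0 n1 n2 n3 n4 n5 n6.
Proof.
  intros Hc. unfold counts_load, kind_size. rewrite !plus_INR.
  pose proof (pos_INR n0); pose proof (pos_INR n1); pose proof (pos_INR n2);
  pose proof (pos_INR n3); pose proof (pos_INR n4); pose proof (pos_INR n5); pose proof (pos_INR n6).
  nra.
Qed.

Lemma counts_load_le1_big c n0 n1 n2 n3 n4 n5 n6 : 0 < c <= 1/40 ->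
  counts_load c n0 n1 n2 n3 n4 n5 n6 <= 1 -> (n0 + n1 <= 1)%nat.
Proof.
  intros Hc Hl. pose proof (counts_load_ge c n0 n1 n2 n3 n4 n5 n6 Hc). pose proof (pos_INR (n2 + n3)).
  enough (n0 + n1 < 2)%nat by lia. apply INR_lt. simpl. nra.
Qed.

Lemma counts_load_le1_medium c n0 n1 n2 n3 n4 n5 n6 : 0 < c <= 1/40 ->
  counts_load c n0 n1 n2 n3 n4 n5 n6 <= 1 -> (n0 + n1 = 1)%nat -> (n2 + n3 <= 1)%nat.
Proof.
  intros Hc Hl E. pose proof (counts_load_ge c n0 n1 n2 n3 n4 n5 n6 Hc) as Hge.
  rewrite E in Hge. simpl INR in Hge.
  enough (n2 + n3 < 2)%nat by lia. apply INR_lt. simpl. lra.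
Qed.

Lemma sum_le1_cases n m : (n + m <= 1)%nat -> (n = 0 /\ m = 0 \/ n = 1 /\ m = 0 \/ n = 0 /\ m = 1)%nat.
Proof. lia. Qed.

(* In a phase-A bin holding one big item and no matching medium one, either the small items
   weigh 1/3 or the bin has slack of order c. *)
Lemma unmatched_bin_slack c n0 n1 n2 n3 n4 : 0 < c <= 1/40 -> (n0 + n1 = 1)%nat -> (n2 + n3 <= 1)%nat ->
  matched n0 n1 n2 n3 = false -> counts_load c n0 n1 n2 n3 n4 0 0 <= 1 ->
  1 <= 5 / (2 * c) * (1 - counts_load c n0 n1 n2 n3 n4 0 0) + 3 * (c * INR n4).
Proof.
  intros Hc Ha Hb G Hl. set (L := 5 / (2 * c)).
  assert (HL : L * c = 5/2) by (unfold L; field; lra).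
  assert (HL0 : 0 < L) by (unfold L; apply Rdiv_lt_0_compat; lra).
  pose proof (pos_INR n4).
  assert (0 <= L * (1 - counts_load c n0 n1 n2 n3 n4 0 0)) by (apply Rmult_le_pos; lra).
  pose proof (sum_le1_cases n0 n1 ltac:(lia)) as Ha'. apply sum_le1_cases in Hb.
  destruct Ha' as [[-> ->]|[[-> ->]|[-> ->]]]; try lia;
  destruct Hb as [[-> ->]|[[-> ->]|[-> ->]]]; simpl in G; try discriminate;
  unfold counts_load, kind_size in *; simpl INR in *.
  - destruct (Rle_dec 1 (3 * (c * INR n4))); [lra|].
    match goal with |- context [1 - ?e] => assert (0.12 <= 1 - e) by lra end. nra.
  - assert (n4 < 2)%nat by (apply INR_lt; simpl; nra).
    assert (INR n4 <= 1) by (replace 1 with (INR 1) by reflexivity; apply le_INR; lia).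
    nra.
  - destruct (Rle_dec 1 (3 * (c * INR n4))); [lra|].
    match goal with |- context [1 - ?e] => assert (0.12 <= 1 - e) by lra end. nra.
  - assert (n4 < 1)%nat by (apply INR_lt; simpl; nra).
    replace n4 with 0%nat by lia. simpl INR in *. nra.
Qed.

Lemma matched_bin_lower c n0 n1 n2 n3 n4 : 0 < c <= 1/40 -> counts_load c n0 n1 n2 n3 n4 0 0 <= 1 ->
  INR (n0 + n1) - 5 / (2 * c) * (1 - counts_load c n0 n1 n2 n3 n4 0 0) - 3 * (c * INR n4)
  <= INR (n0 + n1) * b2R (matched n0 n1 n2 n3).
Proof.
  intros Hc Hl.
  assert (0 <= 5 / (2 * c) * (1 - counts_load c n0 n1 n2 n3 n4 0 0))
    by (apply Rmult_le_pos; [apply Rlt_le, Rdiv_lt_0_compat|]; lra).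
  assert (0 <= c * INR n4) by (pose proof (pos_INR n4); nra).
  pose proof (counts_load_le1_big _ _ _ _ _ _ _ _ Hc Hl) as Ha.
  destruct (Nat.eq_dec (n0 + n1) 0) as [Z|NZ]; [rewrite Z; simpl INR; lra|].
  assert (Ha1 : (n0 + n1 = 1)%nat) by lia. rewrite Ha1. simpl INR.
  destruct (matched n0 n1 n2 n3) eqn:G; simpl b2R; [lra|].
  pose proof (unmatched_bin_slack c n0 n1 n2 n3 n4 Hc Ha1 (counts_load_le1_medium _ _ _ _ _ _ _ _ Hc Hl Ha1)
    G Hl).
  lra.
Qed.

(* A matched pair leaves room c, which the gadgets of sizes 2c/5 and 8c/5 fill up to 4c/5 at most. *)
Lemma matched_bin_slack c n0 n1 n2 n3 n5 n6 : 0 < c <= 1/40 -> (n0 + n1 = 1)%nat -> (n2 + n3 <= 1)%nat ->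
  matched n0 n1 n2 n3 = true -> counts_load c n0 n1 n2 n3 0 n5 n6 <= 1 ->
  c / 5 <= 1 - counts_load c n0 n1 n2 n3 0 n5 n6.
Proof.
  intros Hc Ha Hb G Hl. pose proof (pos_INR n5). pose proof (pos_INR n6).
  pose proof (sum_le1_cases n0 n1 ltac:(lia)) as Ha'. apply sum_le1_cases in Hb.
  destruct Ha' as [[-> ->]|[[-> ->]|[-> ->]]]; try lia;
  destruct Hb as [[-> ->]|[[-> ->]|[-> ->]]]; simpl in G; try discriminate;
  unfold counts_load, kind_size in *; simpl INR in *;
  assert (INR n5 + 4 * INR n6 <= 5/2) by nra;
  assert (n6 < 1)%nat by (apply INR_lt; simpl; nra);
  replace n6 with 0%nat in * by lia; simpl INR in *;
  assert (n5 < 3)%nat by (apply INR_lt; simpl; nra);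
  assert (INR n5 <= 2) by (replace 2 with (INR 2) by (simpl; lra); apply le_INR; lia);
  nra.
Qed.

Lemma matched_bin_upper c n0 n1 n2 n3 n5 n6 : 0 < c <= 1/40 -> counts_load c n0 n1 n2 n3 0 n5 n6 <= 1 ->
  INR (n0 + n1) * b2R (matched n0 n1 n2 n3) <= 5 / c * (1 - counts_load c n0 n1 n2 n3 0 n5 n6).
Proof.
  intros Hc Hl.
  assert (0 <= 5 / c * (1 - counts_load c n0 n1 n2 n3 0 n5 n6))
    by (apply Rmult_le_pos; [apply Rlt_le, Rdiv_lt_0_compat|]; lra).
  destruct (matched n0 n1 n2 n3) eqn:G; simpl b2R; [|lra].
  pose proof (counts_load_le1_big _ _ _ _ _ _ _ _ Hc Hl) as Ha.
  assert (Ha1 : (n0 + n1 = 1)%nat).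
  { unfold matched in G. apply orb_true_iff in G. rewrite !andb_true_iff, !Nat.leb_le in G. lia. }
  pose proof (counts_load_le1_medium _ _ _ _ _ _ _ _ Hc Hl Ha1) as Hb.
  pose proof (matched_bin_slack c n0 n1 n2 n3 n5 n6 Hc Ha1 Hb G Hl) as Hslack.
  apply (Rmult_le_compat_l (5 / c)) in Hslack; [|apply Rlt_le, Rdiv_lt_0_compat; lra].
  replace (5 / c * (c / 5)) with 1 in Hslack by (field; lra).
  rewrite Ha1. simpl INR. lra.
Qed.

Definition item_kind (M i : nat) : nat :=
  if (i <? M)%nat then 0 else if (i <? 2*M)%nat then 1 else if (i <? 3*M)%nat then 2
  else if (i <? 4*M)%nat then 3 else if (i <? 6*M)%nat then 4 else if (i <? 7*M)%nat then 5
  else if (i <? 8*M)%nat then 6 else 7.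
Definition adv_size M c i := kind_size c (item_kind M i).
Definition adv_item M c i : nat * R := (i, adv_size M c i).
Definition inserts M c (ids : list nat) := map (fun i => Ins i (adv_size M c i)) ids.
Definition deletes (ids : list nat) := map Del ids.
Definition adv_sized M c (l : list (nat * R)) := forall x, In x l -> snd x = adv_size M c (fst x).
Definition adv_sized_update M c (u : update) :=
  match u with Ins i s => s = adv_size M c i | Del _ => True end.

Ltac ltb_tac :=
  repeat match goal with
  | |- context [Nat.ltb ?a ?b] => destruct (Nat.ltb_spec a b)
  | H : context [Nat.ltb ?a ?b] |- _ => destruct (Nat.ltb_spec a b)
  end.
Ltac kind_tac := unfold item_kind; ltb_tac; try lia.

Lemma kind_size_01 c k : 0 < c <= 1/40 -> 0 <= kind_size c k <= 1.
Proof. intros. destruct k as [|[|[|[|[|[|[|k]]]]]]]; simpl; lra. Qed.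

Lemma kind_size_heavy c k : 0 < c <= 1/40 -> (k < 4)%nat -> 2/5 <= kind_size c k.
Proof. intros. destruct k as [|[|[|[|k]]]]; simpl; try lra; lia. Qed.

Lemma present_inserts M c ids l i : present i (fold_left step (inserts M c ids) l)
  <-> present i l \/ In i ids.
Proof.
  unfold inserts; revert l; induction ids as [|j ids IH]; intros l; cbn [map fold_left]. simpl; tauto.
  rewrite IH, present_ins. simpl. intuition.
Qed.

Lemma present_deletes ids l i : present i (fold_left step (deletes ids) l) <-> present i l /\ ~ In i ids.
Proof.
  unfold deletes; revert l; induction ids as [|j ids IH]; intros l; cbn [map fold_left]. simpl; tauto.
  rewrite IH, present_del. simpl. intuition.
Qed.

Lemma adv_sized_fold M c s l : adv_sized M c l -> Forall (adv_sized_update M c) s ->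
  adv_sized M c (fold_left step s l).
Proof.
  revert l; induction s as [|u s IH]; intros l Hl Hs; simpl; auto.
  inversion Hs; subst. apply IH; auto.
  intros x Hx. apply In_step in Hx. destruct u as [i s0|i]; simpl in *.
  - destruct Hx as [->|[Hx _]]; simpl; auto.
  - destruct Hx as [Hx _]; auto.
Qed.

Lemma adv_sized_inserts M c ids : Forall (adv_sized_update M c) (inserts M c ids).
Proof. apply Forall_forall. intros u Hu. apply in_map_iff in Hu as (i & <- & _). simpl; auto. Qed.
Lemma adv_sized_deletes M c ids : Forall (adv_sized_update M c) (deletes ids).
Proof. apply Forall_forall. intros u Hu. apply in_map_iff in Hu as (i & <- & _). simpl; auto. Qed.

Lemma wf_from_inserts M c ids l : NoDup ids -> (forall i, In i ids -> ~ present i l) ->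
  (forall i, In i ids -> 0 <= adv_size M c i <= 1) -> wf_from l (inserts M c ids).
Proof.
  intros ND Hnp Hsz t Ht. unfold inserts in *. rewrite length_map in Ht.
  rewrite (nth_indep _ _ (Ins 0%nat (adv_size M c 0%nat))) by (rewrite length_map; auto).
  rewrite (map_nth (fun i => Ins i (adv_size M c i)) ids 0%nat t).
  split. apply Hsz, nth_In; auto.
  rewrite firstn_map. fold (inserts M c (firstn t ids)). rewrite present_inserts.
  intros [H|H]. apply (Hnp (nth t ids 0%nat)); auto. apply nth_In; auto.
  apply (NoDup_nth_notin_firstn ids t 0%nat ND Ht H).
Qed.

Lemma wf_from_deletes ids l : NoDup ids -> (forall i, In i ids -> present i l) -> wf_from l (deletes ids).
Proof.
  intros ND Hp t Ht. unfold deletes in *. rewrite length_map in Ht.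
  rewrite (map_nth Del ids 0%nat t).
  rewrite firstn_map. fold (deletes (firstn t ids)). rewrite present_deletes. split.
  apply Hp, nth_In; auto. apply (NoDup_nth_notin_firstn ids t 0%nat ND Ht).
Qed.

Definition adv_init M c := inserts M c (seq 0 (4*M)) ++ inserts M c (seq (4*M) (2*M)).
Definition adv_switch M c (a b : nat) := deletes (seq a (2*M)) ++ inserts M c (seq b (2*M)).
Definition adv_switch_B M c := adv_switch M c (4*M) (6*M).
Definition adv_switch_A M c := adv_switch M c (6*M) (4*M).
Fixpoint adv_rounds M c r :=
  match r with 0%nat => [] | S r => adv_rounds M c r ++ (adv_switch_B M c ++ adv_switch_A M c) end.
Definition adversary M c r := adv_init M c ++ adv_rounds M c r.

Definition phase_A M (l : list (nat * R)) := forall i, present i l <-> (i < 6*M)%nat.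
Definition phase_B M (l : list (nat * R)) := forall i, present i l <-> ((i < 4*M) \/ (6*M <= i < 8*M))%nat.

Lemma phase_A_init M c : phase_A M (cur (adv_init M c)).
Proof.
  intros i. unfold cur, adv_init. rewrite fold_left_app, present_inserts, present_inserts, !in_seq.
  unfold present; simpl. lia.
Qed.

Lemma phase_B_switch M c l : phase_A M l -> phase_B M (fold_left step (adv_switch_B M c) l).
Proof.
  unfold phase_A, phase_B. intros H i. unfold adv_switch_B, adv_switch.
  rewrite fold_left_app, present_inserts, present_deletes, H, !in_seq. lia.
Qed.

Lemma phase_A_switch M c l : phase_B M l -> phase_A M (fold_left step (adv_switch_A M c) l).
Proof.
  unfold phase_A, phase_B. intros H i. unfold adv_switch_A, adv_switch.
  rewrite fold_left_app, present_inserts, present_deletes, H, !in_seq. lia.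
Qed.

Lemma phase_A_rounds M c r l : phase_A M l -> phase_A M (fold_left step (adv_rounds M c r) l).
Proof.
  induction r; simpl; intros H; auto.
  rewrite !fold_left_app. apply phase_A_switch, phase_B_switch, IHr; auto.
Qed.

Lemma wf_adv_init M c : 0 < c <= 1/40 -> wf_from [] (adv_init M c).
Proof.
  intros Hc. apply wf_from_app; apply wf_from_inserts;
    try apply seq_NoDup; try (intros; apply kind_size_01; auto).
  - intros i _ [].
  - intros i Hi. rewrite in_seq in Hi. rewrite present_inserts, in_seq. unfold present; simpl; lia.
Qed.

Lemma wf_adv_switch M c a b l : 0 < c <= 1/40 ->
  (forall i, (a <= i < a + 2*M)%nat -> present i l) -> (forall i, (b <= i < b + 2*M)%nat -> ~ present i l) ->
  wf_from l (adv_switch M c a b).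
Proof.
  intros Hc Ha Hb. apply wf_from_app.
  - apply wf_from_deletes; [apply seq_NoDup|]. intros i Hi. apply in_seq in Hi. apply Ha. lia.
  - apply wf_from_inserts; [apply seq_NoDup| |intros; apply kind_size_01; auto].
    intros i Hi. apply in_seq in Hi. rewrite present_deletes. intros [Hp _]. apply (Hb i); [lia|auto].
Qed.

Lemma wf_adv_switch_B M c l : 0 < c <= 1/40 -> phase_A M l -> wf_from l (adv_switch_B M c).
Proof. intros Hc H. apply wf_adv_switch; auto; intros i Hi; rewrite (H i); lia. Qed.

Lemma wf_adv_switch_A M c l : 0 < c <= 1/40 -> phase_B M l -> wf_from l (adv_switch_A M c).
Proof. intros Hc H. apply wf_adv_switch; auto; intros i Hi; rewrite (H i); lia. Qed.

Lemma wf_adv_rounds M c r l : 0 < c <= 1/40 -> phase_A M l -> wf_from l (adv_rounds M c r).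
Proof.
  intros Hc. revert l. induction r; simpl; intros l H.
  - intros t Ht; simpl in Ht; lia.
  - apply wf_from_app. apply IHr; auto.
    apply wf_from_app. apply wf_adv_switch_B; auto. apply phase_A_rounds; auto.
    rewrite <- fold_left_app. apply wf_adv_switch_A; auto. rewrite fold_left_app.
    apply phase_B_switch, phase_A_rounds; auto.
Qed.

Lemma wf_adversary M c r : 0 < c <= 1/40 -> wf (adversary M c r).
Proof.
  intros Hc. change (wf_from [] (adversary M c r)). apply wf_from_app.
  - apply wf_adv_init; auto.
  - apply wf_adv_rounds; auto. apply phase_A_init.
Qed.

Lemma adv_sized_init M c : Forall (adv_sized_update M c) (adv_init M c).
Proof. unfold adv_init; apply Forall_app; split; apply adv_sized_inserts. Qed.
Lemma adv_sized_rounds M c r : Forall (adv_sized_update M c) (adv_rounds M c r).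
Proof.
  induction r; simpl; auto. apply Forall_app; split; auto.
  unfold adv_switch_B, adv_switch_A, adv_switch.
  apply Forall_app; split; apply Forall_app; split; auto using adv_sized_inserts, adv_sized_deletes.
Qed.
Lemma adv_sized_adversary M c r : Forall (adv_sized_update M c) (adversary M c r).
Proof. unfold adversary; apply Forall_app; split; auto using adv_sized_init, adv_sized_rounds. Qed.

Lemma adv_sized_cur M c h : Forall (adv_sized_update M c) h -> adv_sized M c (cur h).
Proof. intros H. apply adv_sized_fold; auto. intros x []. Qed.

Lemma present_fold_no_delete s l i : (forall j, In (Del j) s -> j <> i) -> present i l ->
  present i (fold_left step s l).
Proof.
  revert l; induction s as [|u s IH]; intros l H Hp; simpl; auto.
  apply IH. intros j Hj; apply H; right; auto.
  destruct u as [j x|j]. apply present_ins; auto. apply present_del; split; auto.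
  intros ->. apply (H j); auto. left; auto.
Qed.

Lemma present_heavy_switch M c a b l t i : (4*M <= a)%nat -> (i < 4*M)%nat -> present i l ->
  present i (fold_left step (firstn t (adv_switch M c a b)) l).
Proof.
  intros Ha Hi Hp. apply present_fold_no_delete; auto.
  intros j Hj. apply In_firstn in Hj. unfold adv_switch, deletes, inserts in Hj.
  apply in_app_or in Hj as [Hj|Hj]; apply in_map_iff in Hj as (k & E & Hk); try discriminate.
  inversion E; subst. apply in_seq in Hk. lia.
Qed.

Lemma adv_sized_perm M c l ids : NoDup (map fst l) -> adv_sized M c l -> NoDup ids ->
  (forall i, present i l <-> In i ids) -> Permutation l (map (adv_item M c) ids).
Proof.
  intros ND Hc NDi Hp. apply NoDup_Permutation.
  - apply (NoDup_map_inv fst); auto.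
  - apply (NoDup_map_inv fst). rewrite map_map. simpl. rewrite map_id; auto.
  - intros [i s]. split.
    + intros Hin. assert (s = adv_size M c i) by (apply (Hc (i,s) Hin)). subst.
      change (i, adv_size M c i) with (adv_item M c i). apply in_map. apply Hp. apply present_iff; eauto.
    + intros Hin. apply in_map_iff in Hin as (j & E & Hj). unfold adv_item in E. inversion E; subst.
      apply Hp in Hj. apply present_iff in Hj as (s & Hs). pose proof (Hc _ Hs) as E2. simpl in E2. subst s.
      auto.
Qed.

Definition ids_A M := seq 0 (6*M).
Definition ids_B M := seq 0 (4*M) ++ seq (6*M) (2*M).

Lemma phase_A_perm M c l : NoDup (map fst l) -> adv_sized M c l -> phase_A M l ->
  Permutation l (map (adv_item M c) (ids_A M)).
Proof.
  intros ND Hc Hs. apply adv_sized_perm; auto; [apply seq_NoDup|].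
  intros i. rewrite (Hs i). unfold ids_A. rewrite in_seq. lia.
Qed.

Lemma phase_B_perm M c l : NoDup (map fst l) -> adv_sized M c l -> phase_B M l ->
  Permutation l (map (adv_item M c) (ids_B M)).
Proof.
  intros ND Hc Hs. apply adv_sized_perm; auto.
  - unfold ids_B. apply NoDup_app; try apply seq_NoDup. intros a Ha Hb. rewrite in_seq in *. lia.
  - intros i. rewrite (Hs i). unfold ids_B. rewrite in_app_iff, !in_seq. lia.
Qed.

Lemma sumf_adv_block M c (F : nat -> R -> R) a n k :
  (forall i, (a <= i < a + n)%nat -> item_kind M i = k) ->
  sumf (fun x => F (item_kind M (fst x)) (snd x)) (map (adv_item M c) (seq a n))
    = F k (kind_size c k) * INR n.
Proof.
  intros H. rewrite sumf_map. apply sumf_seq_const. intros i Hi. unfold adv_item, adv_size; simpl.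
  rewrite H; auto.
Qed.

Lemma seq_ids_A M : seq 0 (6*M) = seq 0 M ++ seq M M ++ seq (2*M) M ++ seq (3*M) M ++ seq (4*M) (2*M).
Proof.
  replace (6*M)%nat with (M + (M + (M + (M + 2*M))))%nat by lia. rewrite !seq_app.
  replace (0 + M)%nat with M by lia. replace (M + M)%nat with (2*M)%nat by lia.
  replace (2 * M + M)%nat with (3*M)%nat by lia. replace (3 * M + M)%nat with (4*M)%nat by lia. reflexivity.
Qed.

Lemma seq_heavy M : seq 0 (4*M) = seq 0 M ++ seq M M ++ seq (2*M) M ++ seq (3*M) M.
Proof.
  replace (4*M)%nat with (M + (M + (M + M)))%nat by lia. rewrite !seq_app.
  replace (0 + M)%nat with M by lia. replace (M + M)%nat with (2*M)%nat by lia.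
  replace (2 * M + M)%nat with (3*M)%nat by lia. reflexivity.
Qed.

Lemma seq_gadgets M : seq (6*M) (2*M) = seq (6*M) M ++ seq (7*M) M.
Proof.
  replace (2*M)%nat with (M + M)%nat by lia. rewrite !seq_app.
  replace (6 * M + M)%nat with (7*M)%nat by lia. reflexivity.
Qed.

Definition heavy_items M c := map (adv_item M c) (seq 0 (4*M)).

Lemma sumf_heavy_items M c (F : nat -> R -> R) :
  sumf (fun x => F (item_kind M (fst x)) (snd x)) (heavy_items M c) =
  (F 0%nat (kind_size c 0) + F 1%nat (kind_size c 1) + F 2%nat (kind_size c 2) + F 3%nat (kind_size c 3))
    * INR M.
Proof.
  unfold heavy_items. rewrite seq_heavy, !map_app, !sumf_app.
  rewrite (sumf_adv_block M c F 0 M 0), (sumf_adv_block M c F M M 1), (sumf_adv_block M c F (2*M) M 2),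
    (sumf_adv_block M c F (3*M) M 3); try (intros; kind_tac). lra.
Qed.

Lemma sumf_ids_A M c (F : nat -> R -> R) :
  sumf (fun x => F (item_kind M (fst x)) (snd x)) (map (adv_item M c) (ids_A M)) =
  sumf (fun x => F (item_kind M (fst x)) (snd x)) (heavy_items M c) + F 4%nat (kind_size c 4) * INR (2*M).
Proof.
  unfold ids_A, heavy_items. rewrite seq_ids_A, seq_heavy, !map_app, !sumf_app.
  rewrite (sumf_adv_block M c F (4*M) (2*M) 4); try (intros; kind_tac). lra.
Qed.

Lemma sumf_ids_B M c (F : nat -> R -> R) :
  sumf (fun x => F (item_kind M (fst x)) (snd x)) (map (adv_item M c) (ids_B M)) =
  sumf (fun x => F (item_kind M (fst x)) (snd x)) (heavy_items M c) + F 5%nat (kind_size c 5) * INR M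
    + F 6%nat (kind_size c 6) * INR M.
Proof.
  unfold ids_B, heavy_items. rewrite seq_gadgets, !map_app, !sumf_app.
  rewrite (sumf_adv_block M c F (6*M) M 5), (sumf_adv_block M c F (7*M) M 6); try (intros; kind_tac). lra.
Qed.

Definition count_kind M k (L : list (nat * R)) : nat :=
  length (filter (fun x => Nat.eqb (item_kind M (fst x)) k) L).

Lemma INR_count_kind M k L : INR (count_kind M k L) = sumf (fun x => b2R (Nat.eqb (item_kind M (fst x)) k)) L.
Proof.
  unfold count_kind. induction L as [|x L IH]; [simpl; rewrite sumf_nil; auto|].
  rewrite sumf_cons. cbn [filter]. destruct (Nat.eqb (item_kind M (fst x)) k); simpl b2R.
  - cbn [length]. rewrite S_INR, IH. lra.
  - rewrite IH. lra.
Qed.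

Lemma sumf_size_counts M c L : adv_sized M c L ->
  sumf snd L = counts_load c (count_kind M 0 L) (count_kind M 1 L) (count_kind M 2 L) (count_kind M 3 L)
    (count_kind M 4 L) (count_kind M 5 L) (count_kind M 6 L).
Proof.
  induction L as [|x L IH]; intros Hc; [unfold counts_load; simpl; rewrite sumf_nil; lra|].
  rewrite sumf_cons, IH by (intros y Hy; apply Hc; right; auto).
  rewrite (Hc x (in_eq x L)). unfold counts_load, count_kind, adv_size. cbn [filter].
  destruct (item_kind M (fst x)) as [|[|[|[|[|[|[|k]]]]]]]; cbn [Nat.eqb length]; rewrite ?S_INR; simpl; lra.
Qed.

(** * Matched big items *)

Definition is_big M (x : nat * R) := Nat.ltb (item_kind M (fst x)) 2.
Definition is_medium M (x : nat * R) := Nat.leb 2 (item_kind M (fst x)) && Nat.ltb (item_kind M (fst x)) 4.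

Lemma INR_count_big M L : INR (count_kind M 0 L + count_kind M 1 L) = sumf (fun x => b2R (is_big M x)) L.
Proof.
  rewrite plus_INR, !INR_count_kind, <- sumf_plus. apply sumf_ext. intros x _. unfold is_big.
  destruct (item_kind M (fst x)) as [|[|k]]; simpl; lra.
Qed.

Definition matched_list M L := matched (count_kind M 0 L) (count_kind M 1 L) (count_kind M 2 L)
  (count_kind M 3 L).
Definition bin_of (A : algorithm) h (x : nat * R) := A h (fst x).
Definition bin_items (A : algorithm) h b := filter (fun x => Nat.eqb (bin_of A h x) b) (cur h).
Definition matched_big M A h (x : nat * R) :=
  b2R (is_big M x) * b2R (matched_list M (bin_items A h (bin_of A h x))).
Definition matched_count M A h := sumf (matched_big M A h) (cur h).
Definition used_bins A h := labels (bin_of A h) (cur h).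

Lemma INR_bins_used A h : INR (bins_used A h) = sumf (fun _ => 1) (used_bins A h).
Proof. rewrite sumf_const, Rmult_1_l. reflexivity. Qed.

Lemma load_bin_items A h b : load A h b = sumf snd (bin_items A h b).
Proof. reflexivity. Qed.

Lemma sumf_bin_items A h (g : nat * R -> R) : sumf (fun b => sumf g (bin_items A h b)) (used_bins A h)
  = sumf g (cur h).
Proof. apply sumf_partition_labels. Qed.

Lemma in_bin_items A h b x : In x (bin_items A h b) <-> In x (cur h) /\ bin_of A h x = b.
Proof. unfold bin_items. rewrite filter_In, Nat.eqb_eq. tauto. Qed.

Lemma sumf_matched_big_bin M A h b : sumf (matched_big M A h) (bin_items A h b)
  = INR (count_kind M 0 (bin_items A h b) + count_kind M 1 (bin_items A h b))
    * b2R (matched_list M (bin_items A h b)).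
Proof.
  rewrite INR_count_big, <- (Rmult_comm (b2R _)), <- sumf_scal. apply sumf_ext. intros x Hx.
  apply in_bin_items in Hx as [_ E]. unfold matched_big. rewrite E. lra.
Qed.

Lemma adv_sized_bin_items M c A h b : adv_sized M c (cur h) -> adv_sized M c (bin_items A h b).
Proof. intros H x Hx. apply in_bin_items in Hx as [Hx _]. apply H; auto. Qed.

Lemma count_kind_zero M k L : (forall x, In x L -> item_kind M (fst x) <> k) -> count_kind M k L = 0%nat.
Proof.
  intros H. unfold count_kind. induction L as [|x L IH]; simpl; auto.
  destruct (Nat.eqb_spec (item_kind M (fst x)) k). exfalso; apply (H x); auto; left; auto.
  apply IH; intros; apply H; right; auto.
Qed.

Lemma phase_A_kind_le M L x : phase_A M L -> In x L -> (item_kind M (fst x) <= 4)%nat.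
Proof. intros Hs Hx. apply present_in, Hs in Hx. kind_tac. Qed.

Lemma phase_B_kind_neq M L x : phase_B M L -> In x L -> item_kind M (fst x) <> 4%nat.
Proof. intros Hs Hx. apply present_in, Hs in Hx. kind_tac. Qed.

Lemma sumf_phase_A M c h (g : nat * R -> R) (F : nat -> R -> R) :
  adv_sized M c (cur h) -> phase_A M (cur h) -> (forall x, g x = F (item_kind M (fst x)) (snd x)) ->
  sumf g (cur h) =
    (F 0%nat (kind_size c 0) + F 1%nat (kind_size c 1) + F 2%nat (kind_size c 2) + F 3%nat (kind_size c 3))
      * INR M + F 4%nat (kind_size c 4) * INR (2*M).
Proof.
  intros Hc Hs Hg. rewrite (sumf_ext g (fun x => F (item_kind M (fst x)) (snd x))) by auto.
  rewrite (sumf_perm _ _ _ (phase_A_perm M c (cur h) (NoDup_fst_cur h) Hc Hs)).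
  rewrite sumf_ids_A, sumf_heavy_items. reflexivity.
Qed.

Lemma sumf_phase_B M c h (g : nat * R -> R) (F : nat -> R -> R) :
  adv_sized M c (cur h) -> phase_B M (cur h) -> (forall x, g x = F (item_kind M (fst x)) (snd x)) ->
  sumf g (cur h) =
    (F 0%nat (kind_size c 0) + F 1%nat (kind_size c 1) + F 2%nat (kind_size c 2) + F 3%nat (kind_size c 3))
      * INR M + F 5%nat (kind_size c 5) * INR M + F 6%nat (kind_size c 6) * INR M.
Proof.
  intros Hc Hs Hg. rewrite (sumf_ext g (fun x => F (item_kind M (fst x)) (snd x))) by auto.
  rewrite (sumf_perm _ _ _ (phase_B_perm M c (cur h) (NoDup_fst_cur h) Hc Hs)).
  rewrite sumf_ids_B, sumf_heavy_items. reflexivity.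
Qed.

Lemma sumf_slack_lower {Y} (X V Z : Y -> R) l c B :
  sumf (fun b => X b - l * (1 - V b) - 3 * (c * Z b)) B
  = sumf X B - l * (sumf (fun _ => 1) B - sumf V B) - 3 * (c * sumf Z B).
Proof. induction B; rewrite ?sumf_nil, ?sumf_cons; [lra|]. rewrite IHB. lra. Qed.

Lemma sumf_slack_upper {Y} (V : Y -> R) l B : sumf (fun b => l * (1 - V b)) B
  = l * (sumf (fun _ => 1) B - sumf V B).
Proof. induction B; rewrite ?sumf_nil, ?sumf_cons; [lra|]. rewrite IHB. lra. Qed.

Lemma matched_count_phase_A M c A h : 0 < c <= 1/40 -> (forall b, load A h b <= 1) ->
  adv_sized M c (cur h) -> phase_A M (cur h) ->
  2 * INR M - 5 / (2 * c) * (INR (bins_used A h) - 2 * INR M) - 3 * c * (2 * INR M) <= matched_count M A h.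
Proof.
  intros Hc Hv Hcan Hs.
  set (small := fun x : nat * R => b2R (Nat.eqb (item_kind M (fst x)) 4)).
  assert (Hle : sumf (fun b => sumf (fun x => b2R (is_big M x)) (bin_items A h b)
                               - 5 / (2 * c) * (1 - sumf snd (bin_items A h b))
                               - 3 * (c * sumf small (bin_items A h b))) (used_bins A h)
                <= sumf (fun b => sumf (matched_big M A h) (bin_items A h b)) (used_bins A h)).
  { apply sumf_le. intros b _. rewrite sumf_matched_big_bin, <- INR_count_big. unfold small.
    rewrite <- INR_count_kind.
    assert (Hgad : forall k, (4 < k)%nat -> count_kind M k (bin_items A h b) = 0%nat).
    { intros k Hk. apply count_kind_zero. intros x Hx. apply in_bin_items in Hx as [Hx _].
      pose proof (phase_A_kind_le M _ x Hs Hx). lia. }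
    specialize (Hv b). rewrite load_bin_items in Hv.
    rewrite (sumf_size_counts M c) in Hv |- * by (apply adv_sized_bin_items; auto).
    rewrite (Hgad 5%nat), (Hgad 6%nat) in Hv |- * by lia.
    apply matched_bin_lower; auto. }
  assert (E1 : sumf (fun x => b2R (is_big M x)) (cur h) = 2 * INR M).
  { rewrite (sumf_phase_A M c h _ (fun k _ => b2R (Nat.ltb k 2))); auto. simpl b2R. lra. }
  assert (E2 : sumf snd (cur h) = 2 * INR M).
  { rewrite (sumf_phase_A M c h snd (fun _ s => s)); auto. unfold kind_size. rewrite mult_INR. simpl INR.
    field. }
  assert (E3 : sumf small (cur h) = 2 * INR M).
  { rewrite (sumf_phase_A M c h small (fun k _ => b2R (Nat.eqb k 4))); auto. simpl b2R. rewrite mult_INR.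
    simpl INR. lra. }
  rewrite sumf_slack_lower, !sumf_bin_items, <- INR_bins_used, E1, E2, E3 in Hle. unfold matched_count. lra.
Qed.

Lemma matched_count_phase_B M c A h : 0 < c <= 1/40 -> (forall b, load A h b <= 1) ->
  adv_sized M c (cur h) -> phase_B M (cur h) ->
  matched_count M A h <= 5 / c * (INR (bins_used A h) - 2 * INR M).
Proof.
  intros Hc Hv Hcan Hs.
  assert (Hle : sumf (fun b => sumf (matched_big M A h) (bin_items A h b)) (used_bins A h) <=
     sumf (fun b => 5 / c * (1 - sumf snd (bin_items A h b))) (used_bins A h)).
  { apply sumf_le. intros b _. rewrite sumf_matched_big_bin.
    assert (H4 : count_kind M 4 (bin_items A h b) = 0%nat).
    { apply count_kind_zero. intros x Hx. apply in_bin_items in Hx as [Hx _].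
      apply (phase_B_kind_neq M _ x Hs Hx). }
    specialize (Hv b). rewrite load_bin_items in Hv.
    rewrite (sumf_size_counts M c) in Hv |- * by (apply adv_sized_bin_items; auto).
    rewrite H4 in Hv |- *. apply matched_bin_upper; auto. }
  assert (E : sumf snd (cur h) = 2 * INR M).
  { rewrite (sumf_phase_B M c h snd (fun _ s => s)); auto. unfold kind_size. field. }
  rewrite sumf_slack_upper, !sumf_bin_items, <- INR_bins_used, E in Hle. unfold matched_count. lra.
Qed.

Lemma bin_items_one_big M c A h b : 0 < c <= 1/40 -> adv_sized M c (cur h) -> load A h b <= 1 ->
  (count_kind M 0 (bin_items A h b) + count_kind M 1 (bin_items A h b) <= 1)%nat.
Proof.
  intros Hc Hcan Hl.
  rewrite load_bin_items, (sumf_size_counts M c) in Hl by (apply adv_sized_bin_items; auto).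
  eapply counts_load_le1_big; eauto.
Qed.

Lemma count_kind_pos M k L y : In y L -> item_kind M (fst y) = k -> (1 <= count_kind M k L)%nat.
Proof.
  intros Hy Hk. unfold count_kind.
  assert (Hin : In y (filter (fun x => Nat.eqb (item_kind M (fst x)) k) L))
    by (apply filter_In; split; auto; apply Nat.eqb_eq; auto).
  destruct (filter _ L); [destruct Hin | simpl; lia].
Qed.

Lemma count_kind_witness M k L : (1 <= count_kind M k L)%nat -> exists y, In y L /\ item_kind M (fst y) = k.
Proof.
  unfold count_kind. destruct (filter (fun x => Nat.eqb (item_kind M (fst x)) k) L) as [|y l] eqn:E;
    simpl; [lia|].
  intros _. assert (Hy : In y (filter (fun x => Nat.eqb (item_kind M (fst x)) k) L)) by
    (rewrite E; left; auto).
  apply filter_In in Hy as [Hy Hk]. apply Nat.eqb_eq in Hk. eauto.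
Qed.

Lemma heavy_persists M c h1 h2 y : adv_sized M c (cur h1) -> adv_sized M c (cur h2) ->
  phase_A M (cur h1) -> phase_B M (cur h2) -> In y (cur h1) -> (item_kind M (fst y) < 4)%nat -> In y (cur h2).
Proof.
  intros C1 C2 S1 S2 Hy Hk. destruct y as [i s].
  assert (Hp : present i (cur h1)) by (apply present_iff; eauto).
  apply S1 in Hp. assert (Hp2 : present i (cur h2)) by
    (apply S2; simpl in Hk; unfold item_kind in Hk; ltb_tac; lia).
  apply present_iff in Hp2 as (s2 & Hs2).
  pose proof (C1 _ Hy) as E1; pose proof (C2 _ Hs2) as E2; simpl in E1, E2; subst; auto.
Qed.

Lemma matched_big_01 M A h x : 0 <= matched_big M A h x <= 1.
Proof.
  unfold matched_big. pose proof (b2R_01 (is_big M x));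
    pose proof (b2R_01 (matched_list M (bin_items A h (bin_of A h x)))). nra.
Qed.

Lemma count_kind_transfer M c A h1 h2 b k : adv_sized M c (cur h1) -> adv_sized M c (cur h2) ->
  phase_A M (cur h1) -> phase_B M (cur h2) -> (k < 4)%nat ->
  (forall y, In y (bin_items A h1 b) -> item_kind M (fst y) = k -> A h2 (fst y) = b) ->
  (1 <= count_kind M k (bin_items A h1 b))%nat -> (1 <= count_kind M k (bin_items A h2 b))%nat.
Proof.
  intros C1 C2 S1 S2 Hk Hstay Hc. destruct (count_kind_witness M k _ Hc) as (y & Hy & Ky).
  apply (count_kind_pos M k _ y); auto. apply in_bin_items. split; [|apply Hstay; auto].
  apply (heavy_persists M c h1 h2); auto; [apply in_bin_items in Hy; tauto | lia].
Qed.

Lemma matched_transfer M c A h1 h2 b x : 0 < c <= 1/40 -> load A h1 b <= 1 ->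
  adv_sized M c (cur h1) -> adv_sized M c (cur h2) -> phase_A M (cur h1) -> phase_B M (cur h2) ->
  In x (bin_items A h1 b) -> is_big M x = true -> A h2 (fst x) = b ->
  (forall y, In y (bin_items A h1 b) -> is_medium M y = true -> A h2 (fst y) = b) ->
  matched_list M (bin_items A h1 b) = true -> matched_list M (bin_items A h2 b) = true.
Proof.
  intros Hc Hl C1 C2 S1 S2 Hx Big Hxb Hmed.
  assert (Hmed' : forall k, (2 <= k < 4)%nat -> (1 <= count_kind M k (bin_items A h1 b))%nat ->
                            (1 <= count_kind M k (bin_items A h2 b))%nat).
  { intros k Hk. apply (count_kind_transfer M c); auto; [lia|]. intros y Hy Ky. apply Hmed; auto.
    unfold is_medium. rewrite Ky. destruct Hk as [H2 H4]. apply andb_true_iff.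
    rewrite Nat.leb_le, Nat.ltb_lt. auto. }
  assert (Hx2 : In x (bin_items A h2 b)).
  { apply in_bin_items. split; auto. apply (heavy_persists M c h1 h2); auto.
    - apply in_bin_items in Hx; tauto.
    - unfold is_big in Big. apply Nat.ltb_lt in Big. lia. }
  pose proof (bin_items_one_big M c A h1 b Hc C1 Hl) as One.
  unfold is_big in Big. apply Nat.ltb_lt in Big.
  unfold matched_list, matched. rewrite !orb_true_iff, !andb_true_iff, !Nat.leb_le.
  destruct (Nat.lt_ge_cases (item_kind M (fst x)) 1) as [K|K].
  - pose proof (count_kind_pos M 0 _ x Hx ltac:(lia)). pose proof (count_kind_pos M 0 _ x Hx2 ltac:(lia)).
    pose proof (Hmed' 2%nat ltac:(lia)). lia.
  - pose proof (count_kind_pos M 1 _ x Hx ltac:(lia)). pose proof (count_kind_pos M 1 _ x Hx2 ltac:(lia)).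
    pose proof (Hmed' 3%nat ltac:(lia)). lia.
Qed.

Definition medium_moves M A h1 h2 (L : list (nat * R)) : R :=
  sumf (fun y => b2R (is_medium M y) * moved A h1 h2 y) L.

Lemma medium_moves_nonneg M A h1 h2 L : 0 <= medium_moves M A h1 h2 L.
Proof.
  apply sumf_nonneg. intros y _. pose proof (b2R_01 (is_medium M y)). pose proof (moved_01 A h1 h2 y). nra.
Qed.

(* A big item of a matched bin either moves, or a medium item of its bin moves (at most one big
   item shares the bin to be charged for it), or its bin is still matched. *)
Lemma matched_big_le M c A h1 h2 x : 0 < c <= 1/40 -> (forall b, load A h1 b <= 1) ->
  adv_sized M c (cur h1) -> adv_sized M c (cur h2) -> phase_A M (cur h1) -> phase_B M (cur h2) ->
  In x (cur h1) ->
  matched_big M A h1 x <= matched_big M A h2 x + b2R (is_big M x) * moved A h1 h2 x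
                          + b2R (is_big M x) * medium_moves M A h1 h2 (bin_items A h1 (bin_of A h1 x)).
Proof.
  intros Hc Hv C1 C2 S1 S2 Hx.
  set (b := bin_of A h1 x).
  set (Sm := medium_moves M A h1 h2 (bin_items A h1 b)).
  assert (Hterm : forall y, 0 <= b2R (is_medium M y) * moved A h1 h2 y)
    by (intros y; pose proof (b2R_01 (is_medium M y)); pose proof (moved_01 A h1 h2 y); nra).
  assert (HS : 0 <= Sm) by apply medium_moves_nonneg.
  pose proof (matched_big_01 M A h2 x). pose proof (moved_01 A h1 h2 x).
  unfold matched_big at 1. fold b. destruct (is_big M x) eqn:Big; simpl b2R; [|lra].
  destruct (matched_list M (bin_items A h1 b)) eqn:Matched; simpl b2R; [|lra].
  destruct (Rlt_le_dec (moved A h1 h2 x) 1) as [Stay|]; [|lra].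
  destruct (Rlt_le_dec Sm 1) as [Small|]; [|lra].
  assert (Hmed : forall y, In y (bin_items A h1 b) -> is_medium M y = true -> A h2 (fst y) = b).
  { intros y Hy Med. pose proof (sumf_ge_member _ _ y (fun z _ => Hterm z) Hy) as Hle.
    change (sumf _ (bin_items A h1 b)) with Sm in Hle. cbv beta in Hle.
    rewrite Med in Hle. simpl b2R in Hle. rewrite Rmult_1_l in Hle.
    apply in_bin_items in Hy as [_ Hy]. rewrite <- Hy. symmetry. apply moved_lt1. lra. }
  assert (Hxb : In x (bin_items A h1 b)) by (apply in_bin_items; auto).
  assert (Hx2 : A h2 (fst x) = b) by (symmetry; apply moved_lt1; auto).
  unfold matched_big. rewrite Big. unfold bin_of at 1. rewrite Hx2.
  rewrite (matched_transfer M c A h1 h2 b x); auto. simpl. lra.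
Qed.

Lemma sumf_light_zero M c (g : nat * R -> R) a n : (4*M <= a)%nat ->
  (forall x, (4 <= item_kind M (fst x))%nat -> g x = 0) -> sumf g (map (adv_item M c) (seq a n)) = 0.
Proof.
  intros Ha Hg. rewrite <- (sumf_zero (map (adv_item M c) (seq a n))). apply sumf_ext.
  intros x Hx. apply in_map_iff in Hx as (i & <- & Hi). apply in_seq in Hi. apply Hg. simpl. kind_tac.
Qed.

Lemma sumf_phase_A_heavy M c h g : adv_sized M c (cur h) -> phase_A M (cur h) ->
  (forall x, (4 <= item_kind M (fst x))%nat -> g x = 0) -> sumf g (cur h) = sumf g (heavy_items M c).
Proof.
  intros Hc Hs Hg. rewrite (sumf_perm _ _ _ (phase_A_perm M c (cur h) (NoDup_fst_cur h) Hc Hs)).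
  unfold ids_A, heavy_items. replace (6*M)%nat with (4*M + 2*M)%nat by lia.
  rewrite seq_app, map_app, sumf_app.
  rewrite (sumf_light_zero M c g (0 + 4*M) (2*M)); [lra|lia|auto].
Qed.

Lemma sumf_phase_B_heavy M c h g : adv_sized M c (cur h) -> phase_B M (cur h) ->
  (forall x, (4 <= item_kind M (fst x))%nat -> g x = 0) -> sumf g (cur h) = sumf g (heavy_items M c).
Proof.
  intros Hc Hs Hg. rewrite (sumf_perm _ _ _ (phase_B_perm M c (cur h) (NoDup_fst_cur h) Hc Hs)).
  unfold ids_B, heavy_items. rewrite map_app, sumf_app.
  rewrite (sumf_light_zero M c g (6*M) (2*M)); [lra|lia|auto].
Qed.

Lemma is_big_light M x : (4 <= item_kind M (fst x))%nat -> is_big M x = false.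
Proof. intros. unfold is_big. apply Nat.ltb_ge. lia. Qed.
Lemma is_medium_light M x : (4 <= item_kind M (fst x))%nat -> is_medium M x = false.
Proof. intros. unfold is_medium. apply andb_false_iff. right. apply Nat.ltb_ge. lia. Qed.

Lemma charged_medium_moves_le M c A h1 h2 : 0 < c <= 1/40 -> (forall b, load A h1 b <= 1) ->
  adv_sized M c (cur h1) ->
  sumf (fun x => b2R (is_big M x) * medium_moves M A h1 h2 (bin_items A h1 (bin_of A h1 x))) (cur h1)
  <= medium_moves M A h1 h2 (cur h1).
Proof.
  intros Hc Hv C1. unfold medium_moves at 2. rewrite <- !(sumf_bin_items A h1). apply sumf_le. intros b _.
  rewrite (sumf_ext _ (fun x => medium_moves M A h1 h2 (bin_items A h1 b) * b2R (is_big M x))).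
  2: { intros x Hx. apply in_bin_items in Hx as [_ E]. rewrite E. lra. }
  rewrite sumf_scal, <- INR_count_big.
  pose proof (bin_items_one_big M c A h1 b Hc C1 (Hv b)) as One. apply le_INR in One.
  pose proof (medium_moves_nonneg M A h1 h2 (bin_items A h1 b)).
  pose proof (pos_INR (count_kind M 0 (bin_items A h1 b) + count_kind M 1 (bin_items A h1 b))).
  unfold medium_moves in *. simpl INR in One. nra.
Qed.

Lemma sumf_heavy_big_medium M c g :
  sumf (fun x => b2R (is_big M x) * g x) (heavy_items M c)
    + sumf (fun x => b2R (is_medium M x) * g x) (heavy_items M c)
  = sumf g (heavy_items M c).
Proof.
  rewrite <- sumf_plus. apply sumf_ext. intros x Hx. unfold heavy_items in Hx.
  apply in_map_iff in Hx as (i & <- & Hi).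
  apply in_seq in Hi. unfold is_big, is_medium, adv_item; simpl fst.
  assert (item_kind M i < 4)%nat by kind_tac.
  destruct (item_kind M i) as [|[|[|[|k]]]]; simpl; try lra; lia.
Qed.

Lemma matched_count_le_moved M c A h1 h2 : 0 < c <= 1/40 -> (forall b, load A h1 b <= 1) ->
  adv_sized M c (cur h1) -> adv_sized M c (cur h2) -> phase_A M (cur h1) -> phase_B M (cur h2) ->
  matched_count M A h1 <= matched_count M A h2 + sumf (moved A h1 h2) (heavy_items M c).
Proof.
  intros Hc Hv C1 C2 S1 S2.
  assert (Hle : matched_count M A h1 <= sumf (matched_big M A h2) (cur h1)
       + sumf (fun x => b2R (is_big M x) * moved A h1 h2 x) (cur h1)
       + sumf (fun x => b2R (is_big M x) * medium_moves M A h1 h2 (bin_items A h1 (bin_of A h1 x))) (cur h1)).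
  { unfold matched_count. rewrite <- !sumf_plus. apply sumf_le. intros x Hx.
    apply matched_big_le with (c := c); auto. }
  pose proof (charged_medium_moves_le M c A h1 h2 Hc Hv C1) as Hmed. unfold medium_moves at 2 in Hmed.
  assert (E : sumf (matched_big M A h2) (cur h1) = matched_count M A h2).
  { unfold matched_count. rewrite (sumf_phase_A_heavy M c h1), (sumf_phase_B_heavy M c h2); auto;
    intros x Hx; unfold matched_big; rewrite is_big_light; auto; simpl; lra. }
  rewrite (sumf_phase_A_heavy M c h1 (fun x => b2R (is_big M x) * moved A h1 h2 x)) in Hle;
    [|auto|auto|intros x Hx; rewrite is_big_light; auto; simpl; lra].
  rewrite (sumf_phase_A_heavy M c h1 (fun x => b2R (is_medium M x) * moved A h1 h2 x)) in Hmed;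
    [|auto|auto|intros x Hx; rewrite is_medium_light; auto; simpl; lra].
  pose proof (sumf_heavy_big_medium M c (moved A h1 h2)). lra.
Qed.

(** * The lower bound *)

Definition adv_cost M c (u : update) := match u with Ins _ s => s | Del i => adv_size M c i end.

Lemma adv_sized_item M c l x : adv_sized M c l -> In x l -> x = adv_item M c (fst x).
Proof.
  intros H Hx. pose proof (H _ Hx) as E. destruct x as [i s]. unfold adv_item. simpl in *. subst. auto.
Qed.

Lemma upd_cost_le_adv_cost M c prev u : 0 < c <= 1/40 -> adv_sized M c (cur prev) ->
  upd_cost prev u <= adv_cost M c u.
Proof.
  intros Hc Hcan. destruct u as [i s|i]; simpl; [lra|].
  fold (sumf snd (filter (fun p => Nat.eqb (fst p) i) (cur prev))).
  replace (adv_size M c i) with (sumf snd [adv_item M c i]) by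
    (unfold adv_item; rewrite sumf_cons, sumf_nil; simpl; lra).
  apply sumf_incl.
  - apply NoDup_filter, NoDup_cur.
  - intros x Hx. apply filter_In in Hx as [Hx E]. apply Nat.eqb_eq in E.
    left. rewrite (adv_sized_item M c _ x Hcan Hx). rewrite E. reflexivity.
  - intros x [<-|[]]. apply kind_size_01; auto.
Qed.

Lemma total_cost_le_adv_cost M c s : 0 < c <= 1/40 -> Forall (adv_sized_update M c) s ->
  total_cost s <= sumf (adv_cost M c) s.
Proof.
  intros Hc Hf. rewrite total_cost_as_sumf. eapply Rle_trans.
  - apply (sumf_le _ (fun t => adv_cost M c (nth t s (Del 0)))). intros t Ht.
    apply upd_cost_le_adv_cost; auto.
    apply adv_sized_cur. apply Forall_forall. intros u Hu. apply In_firstn in Hu.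
    rewrite Forall_forall in Hf. auto.
  - unfold sumf. rewrite (map_nth_seq (adv_cost M c) s (Del 0)). lra.
Qed.

Lemma adv_cost_inserts M c ids : sumf (adv_cost M c) (inserts M c ids) = sumf (adv_size M c) ids.
Proof. unfold inserts. rewrite sumf_map. reflexivity. Qed.
Lemma adv_cost_deletes M c ids : sumf (adv_cost M c) (deletes ids) = sumf (adv_size M c) ids.
Proof. unfold deletes. rewrite sumf_map. reflexivity. Qed.

Lemma sumf_adv_size M c ids : sumf (adv_size M c) ids = sumf snd (map (adv_item M c) ids).
Proof. rewrite sumf_map. reflexivity. Qed.

Lemma sumf_adv_block_size M c a n k :
  (forall i, (a <= i < a + n)%nat -> item_kind M i = k) ->
  sumf snd (map (adv_item M c) (seq a n)) = kind_size c k * INR n.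
Proof.
  intros H. apply (sumf_adv_block M c (fun _ s => s)); auto.
Qed.

Lemma adv_cost_init M c : sumf (adv_cost M c) (adv_init M c) = 2 * INR M.
Proof.
  unfold adv_init. rewrite sumf_app, !adv_cost_inserts, !sumf_adv_size.
  assert (H1 : sumf snd (map (adv_item M c) (seq 0 (4*M)))
    = (kind_size c 0 + kind_size c 1 + kind_size c 2 + kind_size c 3) * INR M).
  { apply (sumf_heavy_items M c (fun _ s => s)). }
  rewrite H1.
  rewrite (sumf_adv_block_size M c (4*M) (2*M) 4) by (intros; kind_tac).
  unfold kind_size. rewrite mult_INR. simpl INR. lra.
Qed.

Lemma adv_size_gadgets M c : sumf (adv_size M c) (seq (6*M) (2*M)) = 2 * c * INR M.
Proof.
  rewrite sumf_adv_size, seq_gadgets, map_app, sumf_app.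
  rewrite (sumf_adv_block_size M c (6*M) M 5) by (intros; kind_tac).
  rewrite (sumf_adv_block_size M c (7*M) M 6) by (intros; kind_tac).
  unfold kind_size. lra.
Qed.

Lemma adv_size_smalls M c : sumf (adv_size M c) (seq (4*M) (2*M)) = 2 * c * INR M.
Proof.
  rewrite sumf_adv_size. rewrite (sumf_adv_block_size M c (4*M) (2*M) 4) by (intros; kind_tac).
  unfold kind_size. rewrite mult_INR. simpl INR. lra.
Qed.

Lemma adv_cost_rounds M c r : sumf (adv_cost M c) (adv_rounds M c r) = INR r * (8 * c * INR M).
Proof.
  induction r. simpl. rewrite sumf_nil; lra.
  cbn [adv_rounds]. rewrite !sumf_app, IHr. unfold adv_switch_B, adv_switch_A, adv_switch.
  rewrite !sumf_app, !adv_cost_inserts, !adv_cost_deletes, adv_size_gadgets, adv_size_smalls. rewrite S_INR.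
  lra.
Qed.

Lemma packable_by_triples M c h g k (ids : nat -> list nat) : 0 < c <= 1/40 -> adv_sized M c (cur h) ->
  (forall x, In x (cur h) -> (g (fst x) < k)%nat /\ In (fst x) (ids (g (fst x)))) ->
  (forall b, (b < k)%nat -> sumf (adv_size M c) (ids b) <= 1) ->
  packable (sizes h) k.
Proof.
  intros Hc Hcan Hg Hsum. apply (packs_packable _ g), packs_intro; [intros x Hx; apply Hg; auto|].
  intros b Hb. eapply Rle_trans; [|apply (Hsum b Hb)]. rewrite sumf_adv_size. apply sumf_incl.
  - apply NoDup_filter, NoDup_cur.
  - intros x Hx. apply filter_In in Hx as [Hx E]. apply Nat.eqb_eq in E.
    rewrite (adv_sized_item M c _ x Hcan Hx). apply in_map. rewrite <- E. apply Hg; auto.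
  - intros x Hx. apply in_map_iff in Hx as (i & <- & _). apply kind_size_01; auto.
Qed.

Definition pack_lab_A M i :=
  if (i <? 2*M)%nat then i else if (i <? 4*M)%nat then (i - 2*M)%nat else (i - 4*M)%nat.
Definition pack_lab_B M i :=
  if (i <? 2*M)%nat then i else if (i <? 3*M)%nat then (i - M)%nat
  else if (i <? 4*M)%nat then (i - 3*M)%nat else if (i <? 7*M)%nat then (i - 5*M)%nat else (i - 7*M)%nat.

Lemma phase_A_packable M c h : 0 < c <= 1/40 -> adv_sized M c (cur h) -> phase_A M (cur h) ->
  packable (sizes h) (2*M).
Proof.
  intros Hc Hcan Hs. apply (packable_by_triples M c h (pack_lab_A M) _ (fun b => [b; 2*M + b; 4*M + b]%nat));
    auto.
  - intros x Hx. apply present_in, Hs in Hx. unfold pack_lab_A. ltb_tac; simpl; lia.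
  - intros b Hb. unfold sumf, adv_size. cbn [map sumR].
    destruct (Nat.ltb_spec b M);
      [replace (item_kind M b) with 0%nat by kind_tac; replace (item_kind M (2*M+b)) with 2%nat by kind_tac
      |replace (item_kind M b) with 1%nat by kind_tac; replace (item_kind M (2*M+b)) with 3%nat by kind_tac];
      replace (item_kind M (4*M+b)) with 4%nat by kind_tac; simpl; lra.
Qed.

Lemma phase_B_packable M c h : 0 < c <= 1/40 -> adv_sized M c (cur h) -> phase_B M (cur h) ->
  packable (sizes h) (2*M).
Proof.
  intros Hc Hcan Hs.
  apply (packable_by_triples M c h (pack_lab_B M) _
           (fun b => if (b <? M)%nat then [b; 3*M + b; 7*M + b]%nat else [b; M + b; 5*M + b]%nat)); auto.
  - intros x Hx. apply present_in, Hs in Hx. unfold pack_lab_B. ltb_tac; simpl; lia.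
  - intros b Hb. unfold sumf, adv_size. destruct (Nat.ltb_spec b M); cbn [map sumR].
    + replace (item_kind M b) with 0%nat by kind_tac. replace (item_kind M (3*M+b)) with 3%nat by kind_tac.
      replace (item_kind M (7*M+b)) with 6%nat by kind_tac. simpl. lra.
    + replace (item_kind M b) with 1%nat by kind_tac. replace (item_kind M (M+b)) with 2%nat by kind_tac.
      replace (item_kind M (5*M+b)) with 5%nat by kind_tac. simpl. lra.
Qed.

Lemma phase_A_length M c h : adv_sized M c (cur h) -> phase_A M (cur h) -> length (cur h) = (6*M)%nat.
Proof.
  intros Hc Hs. rewrite (Permutation_length (phase_A_perm M c (cur h) (NoDup_fst_cur h) Hc Hs)).
  unfold ids_A. rewrite length_map, length_seq. auto.
Qed.
Lemma phase_B_length M c h : adv_sized M c (cur h) -> phase_B M (cur h) -> length (cur h) = (6*M)%nat.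
Proof.
  intros Hc Hs. rewrite (Permutation_length (phase_B_perm M c (cur h) (NoDup_fst_cur h) Hc Hs)).
  unfold ids_B. rewrite length_map, length_app, !length_seq. lia.
Qed.

Lemma NoDup_heavy_items M c : NoDup (heavy_items M c).
Proof.
  apply (NoDup_map_inv fst). unfold heavy_items. rewrite map_map. simpl. rewrite map_id. apply seq_NoDup.
Qed.

Lemma heavy_moves_le_move_cost M c A h s : 0 < c <= 1/40 -> Forall (adv_sized_update M c) (h ++ s) ->
  (forall t i, (t <= length s)%nat -> (i < 4*M)%nat -> present i (cur (h ++ firstn t s))) ->
  2/5 * sumf (moved A h (h ++ s)) (heavy_items M c) <= move_cost_during A h s.
Proof.
  intros Hc Hf Hp.
  assert (Hcan : forall t, adv_sized M c (cur (h ++ firstn t s))).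
  { intros t. apply adv_sized_cur. apply Forall_app in Hf as [Hf1 Hf2]. apply Forall_app; split; auto.
    rewrite Forall_forall in *. intros u Hu. apply In_firstn in Hu; auto. }
  eapply Rle_trans. 2: apply moved_volume_le_move_cost_during.
  - rewrite <- sumf_scal. apply sumf_le. intros x Hx. unfold heavy_items in Hx.
    apply in_map_iff in Hx as (i & <- & Hi).
    apply in_seq in Hi. unfold moved, adv_item; simpl. unfold adv_size.
    assert (2/5 <= kind_size c (item_kind M i)) by (apply kind_size_heavy; auto; kind_tac).
    pose proof (b2R_01 (negb (Nat.eqb (A h i) (A (h ++ s) i)))). nra.
  - apply NoDup_heavy_items.
  - intros t Ht x Hx. unfold heavy_items in Hx. apply in_map_iff in Hx as (i & <- & Hi). apply in_seq in Hi.
    pose proof (Hp t i Ht ltac:(lia)) as Hpi. apply present_iff in Hpi as (s0 & Hs0).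
    pose proof (Hcan t _ Hs0) as E. simpl in E. subst. exact Hs0.
  - intros t x Ht Hx. rewrite (Hcan t x Hx). apply kind_size_01; auto.
Qed.

Lemma adv_prefix_A M c r : 0 < c <= 1/40 ->
  let h := adv_init M c ++ adv_rounds M c r in
  wf h /\ Forall (adv_sized_update M c) h /\ phase_A M (cur h).
Proof.
  intros Hc h. split; [apply wf_adversary; auto|]. split; [apply adv_sized_adversary|].
  unfold h. rewrite cur_app. apply phase_A_rounds, phase_A_init.
Qed.

Lemma adv_prefix_B M c r : 0 < c <= 1/40 ->
  let h := (adv_init M c ++ adv_rounds M c r) ++ adv_switch_B M c in
  wf h /\ Forall (adv_sized_update M c) h /\ phase_B M (cur h).
Proof.
  intros Hc h. destruct (adv_prefix_A M c (S r) Hc) as (W & F & _).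
  destruct (adv_prefix_A M c r Hc) as (_ & _ & P).
  cbn [adv_rounds] in W, F. rewrite !app_assoc in W, F.
  split; [apply (wf_prefix _ _ W)|]. split; [apply Forall_app in F; tauto|].
  unfold h. rewrite cur_app. apply phase_B_switch; auto.
Qed.

Section RoundCost.

Variables (M : nat) (c eps : R) (A : algorithm) (f : nat -> R).
Hypothesis eps_small : 0 < eps <= 1/4000.
Hypothesis c_def : c = 100 * eps.
Hypothesis A_valid : valid_alg A.
Hypothesis A_competitive : competitive_fn A (1 + eps) f.
Hypothesis f_small : f (6 * M)%nat <= eps * INR (6 * M).

Let c_range : 0 < c <= 1/40.
Proof. lra. Qed.

Lemma bins_used_excess h : wf h -> adv_sized M c (cur h) -> (phase_A M (cur h) \/ phase_B M (cur h)) ->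
  INR (bins_used A h) - 2 * INR M <= 8 * eps * INR M.
Proof.
  intros Hw Hcan Hs. pose proof (A_competitive h Hw) as Hcomp.
  assert (Hopt : (OPT (sizes h) <= 2 * M)%nat).
  { apply OPT_le. destruct Hs; [apply (phase_A_packable M c)|apply (phase_B_packable M c)]; auto. }
  apply le_INR in Hopt. rewrite mult_INR in Hopt. simpl INR in Hopt.
  replace (length (cur h)) with (6*M)%nat in Hcomp
    by (destruct Hs; symmetry; [apply (phase_A_length M c)|apply (phase_B_length M c)]; auto).
  rewrite mult_INR in f_small. simpl INR in f_small.
  assert ((1 + eps) * INR (OPT (sizes h)) <= (1 + eps) * (2 * INR M)) by (apply Rmult_le_compat_l; lra).
  lra.
Qed.

(* Near-optimality forces about 2M matched big items in phase A and few in phase B. *)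
Lemma matched_count_drop hA hB : wf hA -> wf hB -> adv_sized M c (cur hA) -> adv_sized M c (cur hB) ->
  phase_A M (cur hA) -> phase_B M (cur hB) ->
  5/4 * INR M <= matched_count M A hA - matched_count M A hB.
Proof.
  intros WA WB CA CB SA SB.
  pose proof (bins_used_excess hA WA CA (or_introl SA)) as BA.
  pose proof (bins_used_excess hB WB CB (or_intror SB)) as BB.
  pose proof (matched_count_phase_A M c A hA c_range (A_valid hA WA) CA SA) as GA.
  pose proof (matched_count_phase_B M c A hB c_range (A_valid hB WB) CB SB) as GB.
  replace (5 / (2 * c)) with (/ (40 * eps)) in GA by (rewrite c_def; field; lra).
  replace (5 / c) with (/ (20 * eps)) in GB by (rewrite c_def; field; lra).
  assert (P1 : / (40 * eps) * (INR (bins_used A hA) - 2 * INR M) <= / (40 * eps) * (8 * eps * INR M))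
    by (apply Rmult_le_compat_l; [apply Rlt_le, Rinv_0_lt_compat|]; lra).
  assert (P2 : / (20 * eps) * (INR (bins_used A hB) - 2 * INR M) <= / (20 * eps) * (8 * eps * INR M))
    by (apply Rmult_le_compat_l; [apply Rlt_le, Rinv_0_lt_compat|]; lra).
  replace (/ (40 * eps) * (8 * eps * INR M)) with (INR M / 5) in P1 by (field; lra).
  replace (/ (20 * eps) * (8 * eps * INR M)) with (2 * INR M / 5) in P2 by (field; lra).
  pose proof (pos_INR M). rewrite c_def in GA. nra.
Qed.

Lemma round_move_cost r :
  INR M <= move_cost_during A (adv_init M c ++ adv_rounds M c r) (adv_switch_B M c ++ adv_switch_A M c).
Proof.
  destruct (adv_prefix_A M c r c_range) as (WA & FA & SA).
  destruct (adv_prefix_B M c r c_range) as (WB & FB & SB).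
  destruct (adv_prefix_A M c (S r) c_range) as (WA' & FA' & SA').
  cbn [adv_rounds] in WA', FA', SA'. rewrite !app_assoc in WA', FA', SA'.
  set (hA := adv_init M c ++ adv_rounds M c r) in *. set (hB := hA ++ adv_switch_B M c) in *.
  set (hA' := hB ++ adv_switch_A M c) in *.
  pose proof (matched_count_drop hA hB WA WB (adv_sized_cur _ _ _ FA) (adv_sized_cur _ _ _ FB) SA SB).
  pose proof (matched_count_drop hA' hB WA' WB (adv_sized_cur _ _ _ FA') (adv_sized_cur _ _ _ FB) SA' SB).
  pose proof (matched_count_le_moved M c A hA hB c_range (A_valid hA WA) (adv_sized_cur _ _ _ FA)
    (adv_sized_cur _ _ _ FB) SA SB).
  pose proof (matched_count_le_moved M c A hA' hB c_range (A_valid hA' WA') (adv_sized_cur _ _ _ FA')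
    (adv_sized_cur _ _ _ FB) SA' SB).
  assert (K1 : 2/5 * sumf (moved A hA hB) (heavy_items M c) <= move_cost_during A hA (adv_switch_B M c)).
  { apply heavy_moves_le_move_cost; auto. intros t i _ Hi. rewrite cur_app.
    apply present_heavy_switch; [lia|auto|apply SA; lia]. }
  assert (K2 : 2/5 * sumf (moved A hB hA') (heavy_items M c) <= move_cost_during A hB (adv_switch_A M c)).
  { apply heavy_moves_le_move_cost; auto. intros t i _ Hi. rewrite cur_app.
    apply present_heavy_switch; [lia|auto|apply SB; lia]. }
  rewrite (sumf_ext (moved A hB hA') (moved A hA' hB)) in K2 by (intros; apply moved_sym).
  rewrite move_cost_during_app. fold hB. lra.
Qed.

Lemma adversary_move_cost r : INR r * INR M <= total_move A (adversary M c r).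
Proof.
  change (total_move A (adversary M c r)) with (move_cost_during A [] (adv_init M c ++ adv_rounds M c r)).
  rewrite move_cost_during_app, app_nil_l.
  assert (0 <= move_cost_during A [] (adv_init M c)).
  { apply move_cost_during_nonneg. rewrite app_nil_l. apply (wf_prefix _ _ (wf_adversary M c r c_range)). }
  enough (INR r * INR M <= move_cost_during A (adv_init M c) (adv_rounds M c r)) by lra.
  induction r as [|r IH].
  - simpl. unfold move_cost_during. simpl. rewrite sumf_nil. lra.
  - cbn [adv_rounds]. rewrite move_cost_during_app, S_INR.
    pose proof (round_move_cost r). lra.
Qed.

End RoundCost.

Lemma adversary_total_cost_le M c r : 0 < c <= 1/40 ->
  total_cost (adversary M c r) <= 2 * INR M + INR r * (8 * c * INR M).
Proof.
  intros Hc. eapply Rle_trans; [apply (total_cost_le_adv_cost M c); auto; apply adv_sized_adversary|].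
  unfold adversary. rewrite sumf_app, adv_cost_init, adv_cost_rounds. lra.
Qed.

Lemma nat_inv_lt delta : 0 < delta -> exists m : nat, (4000 <= m)%nat /\ / INR m < delta.
Proof.
  intros Hd. destruct (archimed_cor1 delta Hd) as (N & HN & HN0).
  exists (N + 4000)%nat. split; [lia|]. eapply Rle_lt_trans; [|exact HN].
  apply Rinv_le_contravar; [apply lt_0_INR; lia|]. apply le_INR. lia.
Qed.

Theorem lower_bound : exists c : R, 0 < c /\
  forall delta : R, 0 < delta ->
    exists eps : R, 0 < eps < delta /\
      forall (A : algorithm) (f : nat -> R) (gamma : R),
        valid_alg A -> little_o f -> competitive_fn A (1 + eps) f -> recourse A gamma -> c / eps <= gamma.
Proof.
  exists (1/1000). split; [lra|]. intros delta Hd.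
  destruct (nat_inv_lt delta Hd) as (m & Hm & Hlt).
  assert (Hm' : 4000 <= INR m).
  { replace 4000 with (INR (Pos.to_nat 4000)) by (rewrite INR_IPR; reflexivity). apply le_INR. exact Hm. }
  set (eps := / INR m) in *.
  assert (Heps : eps * INR m = 1) by (unfold eps; field; lra).
  assert (He0 : 0 < eps) by (unfold eps; apply Rinv_0_lt_compat; lra).
  assert (He : 0 < eps <= 1/4000) by (split; nra).
  exists eps. split; [lra|]. intros A f gamma Hv Ho Hcomp Hrec.
  destruct (Ho eps (proj1 He)) as (N0 & HN0).
  set (M := S N0). set (c := 100 * eps).
  assert (Hc : 0 < c <= 1/40) by (unfold c; lra).
  assert (HM : 1 <= INR M) by (unfold M; rewrite S_INR; pose proof (pos_INR N0); lra).
  pose proof (Hrec (adversary M c m) (wf_adversary M c m Hc)) as Hr.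
  pose proof (adversary_move_cost M c eps A f He eq_refl Hv Hcomp ltac:(apply HN0; unfold M; lia) m) as Hmove.
  pose proof (adversary_total_cost_le M c m Hc) as Hcost.
  pose proof (total_cost_nonneg _ (wf_adversary M c m Hc)).
  replace (INR m * (8 * c * INR M)) with (800 * INR M * (eps * INR m)) in Hcost by (unfold c; ring).
  rewrite Heps in Hcost.
  (* INR m * INR M <= gamma * 802 * INR M, and INR m = 1 / eps. *)
  destruct (Rle_lt_dec gamma 0) as [Hg|Hg]; [nra|].
  assert (INR m <= 802 * gamma) by nra.
  replace (1 / 1000 / eps) with (INR m / 1000) by (unfold eps; field; lra).
  lra.
Qed.

Theorem theorem1p4 :
  (exists C1 C2 : R, 0 < C1 /\ 0 < C2 /\
     forall eps : R, 0 < eps <= 1 ->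
       exists A : algorithm,
         valid_alg A /\ competitive A (1 + eps) (C1 / eps ^ 2) /\ recourse A (C2 / eps))
  /\
  (exists c : R, 0 < c /\
     forall delta : R, 0 < delta ->
       exists eps : R, 0 < eps < delta /\
         forall (A : algorithm) (f : nat -> R) (gamma : R),
           valid_alg A -> little_o f -> competitive_fn A (1 + eps) f ->
           recourse A gamma -> c / eps <= gamma).
Proof. split; [exact upper_bound | exact lower_bound]. Qed.
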